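(* Let $\mu_0$ and $\mu_n$ ($n\in\mathbb N$) be discrete ensembles of states in $\mathfrak S(\mathcal H)$, $\mu_n=\{p^n_i,\rho^n_i\}$. The following are equivalent: (a) $D_*(\mu_n,\mu_0)\to0$; (b) $D_K(\mu_n,\mu_0)\to0$; (c) $\lim_{n\to\infty}\sum_ip^n_if(\rho^n_i)=\sum_ip^0_if(\rho^0_i)$ for every bounded continuous function $f$ on $\mathfrak S(\mathcal H)$ (with the trace-norm topology). In other words, both $D_*$ and $D_K$ generate the weak convergence topology on the set of discrete ensembles regarded as probability measures $\sum_ip_i\delta_{\rho_i}$.
   Context: $\mathcal H$ is a separable Hilbert space, $\mathfrak S(\mathcal H)$ the set of density operators, $\|\cdot\|_1$ the trace norm. A discrete ensemble $\{p_i,\rho_i\}$ is a finite or countable family of states $\rho_i$ with a probability distribution $\{p_i\}$; it corresponds to the probability measure $\sum_ip_i\delta_{\rho_i}$ on $\mathfrak S(\mathcal H)$ ($\delta_\rho$ the Dirac measure). $D_0(\{p_i,\rho_i\},\{q_i,\sigma_i\})=\frac12\sum_i\|p_i\rho_i-q_i\sigma_i\|_1$ for ensembles indexed by the same index set (a shorter ensemble is padded with zero-probability entries). For an ensemble $\mu$, $\mathcal E(\mu)$ is the set of all finite or countable ensembles $\{p'_j,\rho'_j\}$ with $\sum_jp'_j\delta_{\rho'_j}=\sum_ip_i\delta_{\rho_i}$, and $D_*(\mu,\nu)=\inf_{\mu'\in\mathcal E(\mu),\nu'\in\mathcal E(\nu)}D_0(\mu',\nu')$. Kantorovich distance: $D_K(\{p_i,\rho_i\},\{q_j,\sigma_j\})=\frac12\inf_{\{P_{ij}\}}\sum_{i,j}P_{ij}\|\rho_i-\sigma_j\|_1$,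 infimum over joint probability distributions with $\sum_jP_{ij}=p_i$, $\sum_iP_{ij}=q_j$. *)

From Stdlib Require Import Reals Lra ClassicalEpsilon.
Open Scope R_scope.

(* least upper bound of a set of reals (0 if it does not exist) *)
Definition Rsup (E : R -> Prop) : R :=
  match excluded_middle_informative (exists m, is_lub E m) with
  | left H => proj1_sig (constructive_indefinite_description _ H)
  | right _ => 0
  end.

Definition Rinf (E : R -> Prop) : R := - Rsup (fun x => E (- x)).

(* sum of a convergent real series (0 if it does not converge) *)
Definition series (s : nat -> R) : R :=
  match excluded_middle_informative (exists l, infinite_sum s l) with
  | left H => proj1_sig (constructive_indefinite_description _ H)
  | right _ => 0
  end.

Fixpoint fsum (n : nat) (f : nat -> R) : R :=
  match n with O => 0 | S n' => fsum n' f + f n' end.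

Record C := mkC { re : R ; im : R }.
Definition C0 : C := mkC 0 0.
Definition C1 : C := mkC 1 0.
Definition Cadd (a b : C) : C := mkC (re a + re b) (im a + im b).
Definition Cmul (a b : C) : C :=
  mkC (re a * re b - im a * im b) (re a * im b + im a * re b).
Definition Cconj (a : C) : C := mkC (re a) (- im a).
Definition Cscale (r : R) (a : C) : C := mkC (r * re a) (r * im a).
Definition Csub (a b : C) : C := mkC (re a - re b) (im a - im b).
Definition Cmod (a : C) : R := sqrt (re a ^ 2 + im a ^ 2).
Fixpoint Csum (n : nat) (f : nat -> C) : C :=
  match n with O => C0 | S n' => Cadd (Csum n' f) (f n') end.

(** A separable Hilbert space H is (up to unitary equivalence) l^2(I) with
    I = {0,...,n-1} ([dim = Some n]) or I = N ([dim = None]).  We realise it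
    inside l^2(N) over the orthonormal basis (|j>)_j, and represent an operator
    by its infinite matrix  A j k = <j|A|k>. *)
Definition Mat := nat -> nat -> C.

Definition in_dim (dim : option nat) (j : nat) : Prop :=
  match dim with Some n => (j < n)%nat | None => True end.

Definition Mscale (r : R) (A : Mat) : Mat := fun j k => Cscale r (A j k).
Definition Msub (A B : Mat) : Mat := fun j k => Csub (A j k) (B j k).

(* vectors are v : nat -> C; we only use finitely supported ones, with the
   support contained in {0,...,N-1} *)
Definition inner (N : nat) (u v : nat -> C) : C :=
  Csum N (fun j => Cmul (Cconj (u j)) (v j)).
Definition quad (N : nat) (v : nat -> C) (A : Mat) : C :=
  Csum N (fun j => Csum N (fun k => Cmul (Cmul (Cconj (v j)) (A j k)) (v k))).

Definition is_state (dim : option nat) (rho : Mat) : Prop :=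
  (forall j k, rho k j = Cconj (rho j k)) /\
  (forall (N : nat) (v : nat -> C), 0 <= re (quad N v rho)) /\
  (forall j k, ~ in_dim dim j -> rho j k = C0 /\ rho k j = C0) /\
  infinite_sum (fun j => re (rho j j)) 1.

Definition orthonormal (N m : nat) (e : nat -> nat -> C) : Prop :=
  forall k l, (k < m)%nat -> (l < m)%nat ->
    inner N (e k) (e l) = (if Nat.eqb k l then C1 else C0).

(* Trace norm of a self-adjoint trace-class operator A:
   ||A||_1 = sup over orthonormal families (e_k) of sum_k |<e_k|A|e_k>|
   (attained on an eigenbasis; finitely supported families are dense). *)
Definition tnorm (A : Mat) : R :=
  Rsup (fun s => exists N m e, orthonormal N m e /\
                   s = fsum m (fun k => Cmod (quad N (e k) A))).

(** * Discrete ensembles {p_i, rho_i}, indexed by nat (finite ensembles are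
    padded with zero-probability entries). *)
Definition is_ensemble (dim : option nat) (p : nat -> R) (rho : nat -> Mat) : Prop :=
  (forall i, 0 <= p i) /\ infinite_sum p 1 /\ (forall i, is_state dim (rho i)).

(* the probability measure sum_i p_i delta_{rho_i}, evaluated on a set S *)
Definition ens_measure (p : nat -> R) (rho : nat -> Mat) (S : Mat -> Prop) : R :=
  series (fun i => if excluded_middle_informative (S (rho i)) then p i else 0).

Definition same_measure (p : nat -> R) (rho : nat -> Mat)
                        (p' : nat -> R) (rho' : nat -> Mat) : Prop :=
  forall S : Mat -> Prop, ens_measure p rho S = ens_measure p' rho' S.

Definition D0 (p : nat -> R) (rho : nat -> Mat) (q : nat -> R) (sigma : nat -> Mat) : R :=
  / 2 * series (fun i => tnorm (Msub (Mscale (p i) (rho i)) (Mscale (q i) (sigma i)))).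

Definition Dstar (dim : option nat) (p : nat -> R) (rho : nat -> Mat)
                 (q : nat -> R) (sigma : nat -> Mat) : R :=
  Rinf (fun x => exists p' rho' q' sigma',
          is_ensemble dim p' rho' /\ same_measure p rho p' rho' /\
          is_ensemble dim q' sigma' /\ same_measure q sigma q' sigma' /\
          x = D0 p' rho' q' sigma').

Definition DK (p : nat -> R) (rho : nat -> Mat) (q : nat -> R) (sigma : nat -> Mat) : R :=
  Rinf (fun x => exists P : nat -> nat -> R,
          (forall i j, 0 <= P i j) /\
          (forall i, infinite_sum (fun j => P i j) (p i)) /\
          (forall j, infinite_sum (fun i => P i j) (q j)) /\
          x = / 2 * series (fun i => series (fun j =>
                       P i j * tnorm (Msub (rho i) (sigma j))))).

Definition bounded_on_states (dim : option nat) (f : Mat -> R) : Prop :=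
  exists M, forall rho, is_state dim rho -> Rabs (f rho) <= M.

Definition continuous_on_states (dim : option nat) (f : Mat -> R) : Prop :=
  forall rho, is_state dim rho -> forall eps, 0 < eps -> exists delta, 0 < delta /\
    forall sigma, is_state dim sigma -> tnorm (Msub rho sigma) < delta ->
      Rabs (f rho - f sigma) < eps.

Definition weak_conv (dim : option nat) (p : nat -> nat -> R) (rho : nat -> nat -> Mat)
                     (p0 : nat -> R) (rho0 : nat -> Mat) : Prop :=
  forall f : Mat -> R, bounded_on_states dim f -> continuous_on_states dim f ->
    Un_cv (fun n => series (fun i => p n i * f (rho n i)))
          (series (fun i => p0 i * f (rho0 i))).

(* A coupling [P] of two ensembles flattens into two representations with the
   common weights [P i j], whose [D_0] is the transport cost of [P]; hence
   [D_* <= D_K].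
   If [D_*(mu_n, mu_0) -> 0], pick representations with small [D_0] and compare
   the integrals of [f] term by term: weights differ by at most the trace-norm
   defect, near the first [K] atoms of [mu_0] continuity of [f] applies, and the
   remaining atoms carry little mass.  Integrals depend only on the measures.
   If [mu_n -> mu_0] weakly, take [K] atoms of [mu_0] carrying almost all its
   mass and [delta] below half of their nonzero mutual distances.  Tent functions
   around the atoms show that each [delta]-cell eventually carries under [mu_n]
   almost as much mass as under [mu_0]; coupling these masses inside the cells
   costs at most [delta] plus the unmatched mass. *)

From Stdlib Require Import Reals Lra Lia.
From Stdlib Require Import ClassicalEpsilon Classical FunctionalExtensionality PropExtensionality.
Open Scope R_scope.

Lemma Rsup_lub (E : R -> Prop) :
  (exists x, E x) -> (exists M, forall x, E x -> x <= M) -> is_lub E (Rsup E).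
Proof.
  intros Hne [M HM]. unfold Rsup.
  destruct (excluded_middle_informative _) as [H|H].
  - exact (proj2_sig (constructive_indefinite_description _ H)).
  - exfalso; apply H. destruct (completeness E) as [m Hm]; eauto.
    exists M; exact HM.
Qed.

Lemma Rsup_ub (E : R -> Prop) x :
  (exists M, forall x, E x -> x <= M) -> E x -> x <= Rsup E.
Proof. intros HB Hx. apply (Rsup_lub E (ex_intro _ x Hx) HB), Hx. Qed.

Lemma Rsup_le (E : R -> Prop) b :
  (exists x, E x) -> (forall x, E x -> x <= b) -> Rsup E <= b.
Proof. intros Hne HB. apply (Rsup_lub E Hne (ex_intro _ b HB)). exact HB. Qed.

Lemma Rsup_ext (E F : R -> Prop) : (forall x, E x <-> F x) -> Rsup E = Rsup F.
Proof.
  intros H. f_equal. apply functional_extensionality; intros x.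
  apply propositional_extensionality, H.
Qed.

Lemma Rinf_lb (E : R -> Prop) x :
  (exists m, forall x, E x -> m <= x) -> E x -> Rinf E <= x.
Proof.
  intros [m Hm] Hx. unfold Rinf.
  assert (- x <= Rsup (fun y => E (- y))); [|lra].
  apply Rsup_ub.
  - exists (- m). intros y Hy. specialize (Hm _ Hy). lra.
  - rewrite Ropp_involutive. exact Hx.
Qed.

Lemma Rinf_ge (E : R -> Prop) b :
  (exists x, E x) -> (forall x, E x -> b <= x) -> b <= Rinf E.
Proof.
  intros [x Hx] HB. unfold Rinf.
  assert (Rsup (fun y => E (- y)) <= - b); [|lra].
  apply Rsup_le.
  - exists (- x). rewrite Ropp_involutive. exact Hx.
  - intros y Hy. specialize (HB _ Hy). lra.
Qed.

Lemma Rinf_approx (E : R -> Prop) eps :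
  (exists x, E x) -> 0 < eps -> exists x, E x /\ x < Rinf E + eps.
Proof.
  intros Hne He. apply NNPP; intros H.
  assert (Rinf E + eps <= Rinf E); [|lra].
  apply Rinf_ge; [exact Hne|]. intros x Hx.
  apply Rnot_lt_le; intros Hlt. apply H; eauto.
Qed.

Lemma Rabs_le_between a b : Rabs a <= b -> - b <= a <= b.
Proof. unfold Rabs; destruct (Rcase_abs a); intros; lra. Qed.

Lemma fsum_S_sum f n : fsum (S n) f = sum_f_R0 f n.
Proof. induction n; simpl in *; [ring|]. rewrite <- IHn. simpl. ring. Qed.

Lemma fsum_ext n f g : (forall i, (i < n)%nat -> f i = g i) -> fsum n f = fsum n g.
Proof. induction n; intros H; simpl; [reflexivity|]. rewrite IHn, H; auto; lia. Qed.

Lemma fsum_le n f g : (forall i, (i < n)%nat -> f i <= g i) -> fsum n f <= fsum n g.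
Proof.
  induction n; intros H; simpl; [lra|].
  apply Rplus_le_compat; [apply IHn; intros; apply H|apply H]; lia.
Qed.

Lemma fsum_zero n : fsum n (fun _ => 0) = 0.
Proof. induction n; simpl; [ring|rewrite IHn; ring]. Qed.

Lemma fsum_ge0 n f : (forall i, (i < n)%nat -> 0 <= f i) -> 0 <= fsum n f.
Proof. intros H. rewrite <- (fsum_zero n). apply fsum_le, H. Qed.

Lemma fsum_plus n f g : fsum n (fun i => f i + g i) = fsum n f + fsum n g.
Proof. induction n; simpl; [ring|rewrite IHn; ring]. Qed.

Lemma fsum_minus n f g : fsum n (fun i => f i - g i) = fsum n f - fsum n g.
Proof. induction n; simpl; [ring|rewrite IHn; ring]. Qed.

Lemma fsum_scal n c f : fsum n (fun i => c * f i) = c * fsum n f.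
Proof. induction n; simpl; [ring|rewrite IHn; ring]. Qed.

Lemma fsum_abs n f : Rabs (fsum n f) <= fsum n (fun i => Rabs (f i)).
Proof.
  induction n; simpl; [rewrite Rabs_R0; lra|].
  eapply Rle_trans; [apply Rabs_triang|lra].
Qed.

Lemma fsum_mono n m f : (n <= m)%nat -> (forall i, 0 <= f i) -> fsum n f <= fsum m f.
Proof. intros H Hf. induction H; [lra|simpl; specialize (Hf m); lra]. Qed.

Lemma fsum_add_range A B f : fsum (A + B) f = fsum A f + fsum B (fun t => f (A + t)%nat).
Proof.
  induction B; simpl; [rewrite Nat.add_0_r; ring|].
  rewrite Nat.add_succ_r; simpl. rewrite IHB; ring.
Qed.

Lemma fsum_swap n m (a : nat -> nat -> R) :
  fsum n (fun i => fsum m (fun j => a i j)) = fsum m (fun j => fsum n (fun i => a i j)).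
Proof.
  induction n; simpl; [rewrite fsum_zero; reflexivity|].
  rewrite IHn, <- fsum_plus. reflexivity.
Qed.

Lemma series_eq s l : infinite_sum s l -> series s = l.
Proof.
  intros H. unfold series. destruct (excluded_middle_informative _) as [H'|H'].
  - exact (uniqueness_sum _ _ _ (proj2_sig (constructive_indefinite_description _ H')) H).
  - exfalso; apply H'; exists l; exact H.
Qed.

Lemma series_sum s : (exists l, infinite_sum s l) -> infinite_sum s (series s).
Proof. intros [l H]. rewrite (series_eq s l H). exact H. Qed.

Lemma Un_cv_const c : Un_cv (fun _ => c) c.
Proof. intros e He; exists 0%nat; intros; unfold R_dist; rewrite Rminus_diag, Rabs_R0; lra. Qed.

Lemma Un_cv_0_le a b : (forall n, 0 <= a n <= b n) -> Un_cv b 0 -> Un_cv a 0.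
Proof.
  intros Hab Hb e He. destruct (Hb e He) as [N HN]. exists N. intros n Hn.
  specialize (HN n Hn). specialize (Hab n). unfold R_dist in *.
  rewrite Rminus_0_r, Rabs_right in * by lra. lra.
Qed.

Lemma isum_ge0 s l : (forall i, 0 <= s i) -> infinite_sum s l -> 0 <= l.
Proof.
  intros H1 H2. apply (@Rle_cv_lim (fun _ => 0) (sum_f_R0 s)); auto using Un_cv_const.
  intros n; apply cond_pos_sum; auto.
Qed.

Lemma series_ge0 s : (forall i, 0 <= s i) -> 0 <= series s.
Proof.
  intros H. unfold series. destruct (excluded_middle_informative _) as [H'|H']; [|lra].
  exact (isum_ge0 _ _ H (proj2_sig (constructive_indefinite_description _ H'))).
Qed.

Lemma isum_le a b la lb :
  (forall i, a i <= b i) -> infinite_sum a la -> infinite_sum b lb -> la <= lb.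
Proof.
  intros H Ha Hb. apply (@Rle_cv_lim (sum_f_R0 a) (sum_f_R0 b)); auto.
  intros n; apply sum_Rle; auto.
Qed.

Lemma isum_ext a b l : (forall i, a i = b i) -> infinite_sum a l -> infinite_sum b l.
Proof.
  intros H Ha e He. destruct (Ha e He) as [N HN]; exists N; intros n Hn.
  rewrite <- (sum_eq a b); auto.
Qed.

Lemma isum_plus a b la lb : infinite_sum a la -> infinite_sum b lb ->
  infinite_sum (fun i => a i + b i) (la + lb).
Proof.
  intros Ha Hb e He. destruct (CV_plus _ _ _ _ Ha Hb e He) as [N HN].
  exists N; intros n Hn. rewrite plus_sum. apply HN; auto.
Qed.

Lemma isum_scal a la c : infinite_sum a la -> infinite_sum (fun i => c * a i) (c * la).
Proof.
  intros Ha e He. destruct (CV_mult _ _ _ _ (Un_cv_const c) Ha e He) as [N HN].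
  exists N; intros n Hn.
  replace (sum_f_R0 (fun i => c * a i) n) with (c * sum_f_R0 a n); [apply HN; auto|].
  rewrite scal_sum. apply sum_eq; intros; ring.
Qed.

Lemma isum_minus a b la lb : infinite_sum a la -> infinite_sum b lb ->
  infinite_sum (fun i => a i - b i) (la - lb).
Proof.
  intros Ha Hb. replace (la - lb) with (la + -1 * lb) by ring.
  eapply isum_ext; [|exact (isum_plus _ _ _ _ Ha (isum_scal _ _ (-1) Hb))].
  intros; simpl; ring.
Qed.

Lemma isum_dominated a b lb : (forall i, 0 <= a i <= b i) -> infinite_sum b lb ->
  exists la, infinite_sum a la.
Proof.
  intros H Hb. destruct (Rseries_CV_comp a b H (exist _ lb Hb)) as [l Hl]. eauto.
Qed.

Lemma isum_abs_dominated a b lb : (forall i, Rabs (a i) <= b i) -> infinite_sum b lb ->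
  exists la, infinite_sum a la.
Proof.
  intros H Hb.
  destruct (isum_dominated (fun i => a i + b i) (fun i => 2 * b i) (2 * lb)) as [l Hl].
  - intros i; specialize (H i). apply Rabs_le_between in H; lra.
  - apply isum_scal; auto.
  - exists (l - lb). eapply isum_ext; [|apply (isum_minus _ _ _ _ Hl Hb)].
    intros; simpl; ring.
Qed.

Lemma isum_abs_le x lx B lB : infinite_sum x lx -> infinite_sum B lB ->
  (forall k, Rabs (x k) <= B k) -> Rabs lx <= lB.
Proof.
  intros Hx HB H. apply Rabs_le. split.
  - replace (- lB) with (-1 * lB) by ring.
    apply (isum_le (fun k => -1 * B k) x); auto using isum_scal.
    intros k; specialize (H k); apply Rabs_le_between in H; lra.
  - apply (isum_le x B); auto. intros k; specialize (H k); apply Rabs_le_between in H; lra.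
Qed.

Lemma isum_fsum_le a l n : (forall i, 0 <= a i) -> infinite_sum a l -> fsum n a <= l.
Proof.
  intros H1 H2. destruct n; [simpl; eapply isum_ge0; eauto|].
  rewrite fsum_S_sum. apply sum_incr; auto.
Qed.

Lemma isum_term_le a l i : (forall k, 0 <= a k) -> infinite_sum a l -> a i <= l.
Proof.
  intros H0 H. eapply Rle_trans; [|apply (isum_fsum_le a l (S i)); auto]. simpl.
  generalize (fsum_ge0 i a ltac:(intros; auto)); lra.
Qed.

Lemma isum_finite a K : (forall i, (K <= i)%nat -> a i = 0) -> infinite_sum a (fsum K a).
Proof.
  intros H e He. exists K. intros n Hn.
  replace (sum_f_R0 a n) with (fsum K a).
  { unfold R_dist; rewrite Rminus_diag, Rabs_R0; lra. }
  rewrite <- fsum_S_sum. assert (HK : (K <= S n)%nat) by lia. clear Hn.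
  induction HK; [reflexivity|]. simpl. rewrite <- IHHK, H by lia. ring.
Qed.

Lemma isum_zero : infinite_sum (fun _ => 0) 0.
Proof. exact (isum_finite (fun _ => 0) 0 (fun _ _ => eq_refl)). Qed.

Lemma isum_fsum K (a : nat -> nat -> R) (l : nat -> R) :
  (forall c, (c < K)%nat -> infinite_sum (a c) (l c)) ->
  infinite_sum (fun i => fsum K (fun c => a c i)) (fsum K l).
Proof.
  induction K; intros H; simpl; [apply isum_zero|].
  apply isum_plus; [apply IHK; intros|]; apply H; lia.
Qed.

Lemma isum_tail a l eps : infinite_sum a l -> 0 < eps ->
  exists K, forall n, (K <= n)%nat -> Rabs (fsum n a - l) < eps.
Proof.
  intros H He. destruct (H eps He) as [N HN]. exists (S N). intros n Hn.
  destruct n; [lia|]. rewrite fsum_S_sum. apply HN; lia.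
Qed.

Lemma isum_of_fsum a l :
  (forall eps, 0 < eps -> exists K, forall n, (K <= n)%nat -> Rabs (fsum n a - l) < eps) ->
  infinite_sum a l.
Proof.
  intros H e He. destruct (H e He) as [K HK]. exists K; intros n Hn.
  rewrite <- fsum_S_sum. apply HK; lia.
Qed.

Lemma isum_le_bound u l B : infinite_sum u l -> (forall n, fsum n u <= B) -> l <= B.
Proof.
  intros H HB. apply (@Rle_cv_lim (sum_f_R0 u) (fun _ => B)); auto using Un_cv_const.
  intros n; rewrite <- fsum_S_sum; auto.
Qed.

Lemma isum_bounded u B : (forall i, 0 <= u i) -> (forall n, fsum n u <= B) ->
  exists l, infinite_sum u l.
Proof.
  intros H0 HB. destruct (growing_cv (sum_f_R0 u)) as [l Hl]; [| |eauto].
  - intros n; simpl; specialize (H0 (S n)); lra.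
  - exists B. intros x [n ->]. rewrite <- fsum_S_sum; auto.
Qed.

Lemma Rdiv_nonneg a b : 0 <= a -> 0 < b -> 0 <= a / b.
Proof. intros Ha Hb. apply Rmult_le_pos; [exact Ha|apply Rlt_le, Rinv_0_lt_compat, Hb]. Qed.

Lemma Rdiv_bounded_01 m a : 0 <= m <= a -> 0 <= m / a <= 1.
Proof.
  intros H. destruct (Req_dec a 0) as [->|Hn]; [unfold Rdiv; rewrite Rinv_0; lra|].
  split; [apply Rdiv_nonneg; lra|].
  apply (Rmult_le_reg_r a); [lra|]. unfold Rdiv; rewrite Rmult_assoc, Rinv_l; lra.
Qed.

Lemma Rdiv_mul_bounded m a : 0 <= m <= a -> m / a * a = m.
Proof.
  intros H. destruct (Req_dec a 0) as [->|Hn]; [|field; auto].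
  replace m with 0 by lra. unfold Rdiv; ring.
Qed.

Lemma C_ext a b : re a = re b -> im a = im b -> a = b.
Proof. destruct a, b; simpl; intros; subst; reflexivity. Qed.

Definition Copp (a : C) : C := mkC (- re a) (- im a).

Lemma Cring_theory : ring_theory C0 C1 Cadd Cmul Csub Copp (@eq C).
Proof.
  constructor; intros; apply C_ext; unfold Cadd, Cmul, Csub, Copp, C0, C1; simpl; ring.
Qed.
Add Ring Cring : Cring_theory.

Lemma Cscale_mul r z : Cscale r z = Cmul (mkC r 0) z.
Proof. apply C_ext; unfold Cscale, Cmul; simpl; ring. Qed.

Lemma Cconj_mul a b : Cconj (Cmul a b) = Cmul (Cconj a) (Cconj b).
Proof. apply C_ext; unfold Cconj, Cmul; simpl; ring. Qed.
Lemma Cconj_conj a : Cconj (Cconj a) = a.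
Proof. apply C_ext; unfold Cconj; simpl; ring. Qed.
Lemma Cconj_add a b : Cconj (Cadd a b) = Cadd (Cconj a) (Cconj b).
Proof. apply C_ext; unfold Cconj, Cadd; simpl; ring. Qed.
Lemma Cconj_sub a b : Cconj (Csub a b) = Csub (Cconj a) (Cconj b).
Proof. apply C_ext; unfold Cconj, Csub; simpl; ring. Qed.
Lemma Cconj_C1 : Cconj C1 = C1.
Proof. apply C_ext; unfold Cconj, C1; simpl; ring. Qed.
Lemma Cconj_C0 : Cconj C0 = C0.
Proof. apply C_ext; unfold Cconj, C0; simpl; ring. Qed.

Lemma Csum_ext n f g : (forall i, (i < n)%nat -> f i = g i) -> Csum n f = Csum n g.
Proof. induction n; intros H; simpl; [reflexivity|]. rewrite IHn, H; auto; lia. Qed.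
Lemma Csum_add n f g : Csum n (fun i => Cadd (f i) (g i)) = Cadd (Csum n f) (Csum n g).
Proof. induction n; simpl; [apply C_ext; unfold Cadd, C0; simpl; ring|rewrite IHn; ring]. Qed.
Lemma Csum_sub n f g : Csum n (fun i => Csub (f i) (g i)) = Csub (Csum n f) (Csum n g).
Proof. induction n; simpl; [apply C_ext; unfold Csub, C0; simpl; ring|rewrite IHn; ring]. Qed.
Lemma Csum_mul_l n c f : Cmul c (Csum n f) = Csum n (fun i => Cmul c (f i)).
Proof. induction n; simpl; [ring|rewrite <- IHn; ring]. Qed.
Lemma Csum_mul_r n c f : Cmul (Csum n f) c = Csum n (fun i => Cmul (f i) c).
Proof. induction n; simpl; [ring|rewrite <- IHn; ring]. Qed.
Lemma Csum_zero n : Csum n (fun _ => C0) = C0.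
Proof. induction n; simpl; [reflexivity|rewrite IHn; ring]. Qed.
Lemma Csum_conj n f : Cconj (Csum n f) = Csum n (fun i => Cconj (f i)).
Proof. induction n; simpl; [apply Cconj_C0|rewrite Cconj_add, IHn; reflexivity]. Qed.
Lemma Csum_swap n m (F : nat -> nat -> C) :
  Csum n (fun j => Csum m (fun k => F j k)) = Csum m (fun k => Csum n (fun j => F j k)).
Proof.
  induction n; simpl; [rewrite Csum_zero; reflexivity|].
  rewrite IHn, <- Csum_add. reflexivity.
Qed.
Lemma re_Csum n f : re (Csum n f) = fsum n (fun i => re (f i)).
Proof. induction n; simpl; [reflexivity|rewrite IHn; reflexivity]. Qed.

Definition kron (j a : nat) : C := if Nat.eqb j a then C1 else C0.

Lemma kron_sym j a : kron j a = kron a j.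
Proof. unfold kron; rewrite Nat.eqb_sym; reflexivity. Qed.
Lemma Cconj_kron j a : Cconj (kron j a) = kron j a.
Proof. unfold kron; destruct (Nat.eqb j a); [apply Cconj_C1|apply Cconj_C0]. Qed.

Lemma Csum_kron N a g : (a < N)%nat -> Csum N (fun j => Cmul (kron j a) (g j)) = g a.
Proof.
  induction N; intros H; [lia|]. simpl.
  destruct (Nat.eq_dec a N) as [->|Hne].
  - rewrite (Csum_ext _ _ (fun _ => C0)).
    + rewrite Csum_zero. unfold kron. rewrite Nat.eqb_refl. ring.
    + intros i Hi. unfold kron. destruct (Nat.eqb_spec i N); [lia|ring].
  - rewrite IHN by lia. unfold kron. destruct (Nat.eqb_spec N a); [lia|ring].
Qed.

Lemma quad_lin N v a b A B :
  quad N v (fun j k => Csub (Cmul a (A j k)) (Cmul b (B j k))) =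
  Csub (Cmul a (quad N v A)) (Cmul b (quad N v B)).
Proof.
  unfold quad. rewrite !Csum_mul_l, <- Csum_sub. apply Csum_ext; intros j _.
  rewrite !Csum_mul_l, <- Csum_sub. apply Csum_ext; intros k _. ring.
Qed.

Definition herm (A : Mat) := forall j k, A k j = Cconj (A j k).

Lemma quad_conj N v A : herm A -> Cconj (quad N v A) = quad N v A.
Proof.
  intros H. unfold quad. rewrite Csum_conj.
  rewrite (Csum_ext _ _ (fun j => Csum N (fun k => Cmul (Cmul (Cconj (v k)) (A k j)) (v j)))).
  - apply Csum_swap.
  - intros j _. rewrite Csum_conj. apply Csum_ext; intros k _.
    rewrite !Cconj_mul, Cconj_conj, <- H. ring.
Qed.

Lemma quad_im N v A : herm A -> im (quad N v A) = 0.
Proof.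
  intros H. assert (E : im (Cconj (quad N v A)) = im (quad N v A)) by (rewrite quad_conj; auto).
  unfold Cconj in E; simpl in E. lra.
Qed.

Definition basis (k : nat) : nat -> C := fun j => kron k j.

Lemma quad_basis N k A : (k < N)%nat -> quad N (basis k) A = A k k.
Proof.
  intros Hk. unfold quad, basis.
  rewrite (Csum_ext _ _ (fun j => Cmul (kron j k) (A j k)));
    [apply (Csum_kron N k (fun j => A j k)); auto|].
  intros j _.
  rewrite (Csum_ext _ _ (fun l => Cmul (kron l k) (Cmul (Cconj (kron k j)) (A j l)))).
  - rewrite Csum_kron by auto. rewrite Cconj_kron, kron_sym. ring.
  - intros l _. rewrite (kron_sym k l). ring.
Qed.

Lemma basis_orthonormal N : orthonormal N N basis.
Proof.
  intros k l Hk Hl. unfold inner, basis.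
  rewrite (Csum_ext _ _ (fun j => Cmul (kron j k) (kron l j))).
  - rewrite Csum_kron by auto. unfold kron. rewrite Nat.eqb_sym. reflexivity.
  - intros j _. rewrite Cconj_kron, kron_sym. reflexivity.
Qed.

(* With [proj_mx] the projection onto the span of the [e k], the vectors
   [proj_compl j = (I - proj_mx) |j>] satisfy
   [sum_j <proj_compl j|A|proj_compl j> = tr A - sum_k <e k|A|e k>];
   for positive [A] the left side is nonnegative. *)
Section Trace.
Variables (N m : nat) (e : nat -> nat -> C) (A : Mat).
Hypothesis Hon : orthonormal N m e.

Definition proj_mx (a b : nat) : C := Csum m (fun k => Cmul (e k a) (Cconj (e k b))).
Definition proj_compl (j : nat) : nat -> C := fun a => Csub (kron j a) (proj_mx a j).

Lemma proj_mx_conj a b : Cconj (proj_mx a b) = proj_mx b a.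
Proof.
  unfold proj_mx. rewrite Csum_conj. apply Csum_ext; intros.
  rewrite Cconj_mul, Cconj_conj; ring.
Qed.

Lemma proj_mx_idem a b : Csum N (fun j => Cmul (proj_mx b j) (proj_mx j a)) = proj_mx b a.
Proof.
  unfold proj_mx.
  rewrite (Csum_ext _ _ (fun j => Csum m (fun k => Csum m (fun l =>
     Cmul (Cmul (e k b) (Cconj (e l a))) (Cmul (Cconj (e k j)) (e l j)))))).
  2:{ intros j _. rewrite Csum_mul_r. apply Csum_ext; intros k _.
      rewrite Csum_mul_l. apply Csum_ext; intros l _. ring. }
  rewrite Csum_swap. apply Csum_ext; intros k Hk. rewrite Csum_swap.
  rewrite (Csum_ext _ _ (fun l => Cmul (kron l k) (Cmul (e k b) (Cconj (e l a))))).
  - rewrite Csum_kron by auto. reflexivity.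
  - intros l Hl. rewrite <- Csum_mul_l. fold (inner N (e k) (e l)).
    rewrite Hon by auto. unfold kron. rewrite Nat.eqb_sym.
    destruct (Nat.eqb l k); ring.
Qed.

Lemma proj_compl_gram a b : (a < N)%nat -> (b < N)%nat ->
  Csum N (fun j => Cmul (Cconj (proj_compl j a)) (proj_compl j b)) =
  Csub (kron a b) (proj_mx b a).
Proof.
  intros Ha Hb. unfold proj_compl.
  rewrite (Csum_ext _ _ (fun j =>
     Csub (Csub (Cmul (kron j a) (kron j b)) (Cmul (kron j a) (proj_mx b j)))
          (Csub (Cmul (kron j b) (proj_mx j a)) (Cmul (proj_mx b j) (proj_mx j a))))).
  2:{ intros j _. rewrite Cconj_sub, Cconj_kron, proj_mx_conj. ring. }
  rewrite !Csum_sub, !Csum_kron, proj_mx_idem, kron_sym by auto. ring.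
Qed.

Lemma trace_identity :
  Csum N (fun j => quad N (proj_compl j) A) =
  Csub (Csum N (fun a => A a a)) (Csum m (fun k => quad N (e k) A)).
Proof.
  unfold quad. rewrite Csum_swap.
  rewrite (Csum_ext _ _ (fun a => Csum N (fun b => Cmul (A a b) (Csub (kron a b) (proj_mx b a))))).
  2:{ intros a Ha. rewrite Csum_swap. apply Csum_ext; intros b Hb.
      rewrite <- proj_compl_gram by auto. rewrite Csum_mul_l. apply Csum_ext; intros; ring. }
  rewrite (Csum_ext m _ (fun k => Csum N (fun a => Csum N (fun b =>
     Cmul (A a b) (Cmul (e k b) (Cconj (e k a))))))).
  2:{ intros k _. apply Csum_ext; intros a _. apply Csum_ext; intros b _. ring. }
  rewrite (Csum_swap m N), <- Csum_sub. apply Csum_ext; intros a Ha.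
  rewrite (Csum_swap m N).
  rewrite (Csum_ext _ _ (fun b => Csub (Cmul (kron b a) (A a b)) (Cmul (A a b) (proj_mx b a)))).
  2:{ intros b _. rewrite kron_sym. ring. }
  rewrite Csum_sub, Csum_kron by auto. f_equal.
  apply Csum_ext; intros b _. unfold proj_mx. rewrite Csum_mul_l. reflexivity.
Qed.

End Trace.

Lemma quad_fsum_le_trace N m e A : orthonormal N m e ->
  (forall v, 0 <= re (quad N v A)) ->
  fsum m (fun k => re (quad N (e k) A)) <= fsum N (fun a => re (A a a)).
Proof.
  intros Hon Hpsd.
  assert (H : 0 <= re (Csum N (fun j => quad N (proj_compl m e j) A)))
    by (rewrite re_Csum; apply fsum_ge0; intros; apply Hpsd).
  rewrite trace_identity in H by exact Hon. unfold Csub in H; simpl in H.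
  rewrite !re_Csum in H. lra.
Qed.

Definition qf N v (A : Mat) := re (quad N v A).

Definition tnorm_sums p (A : Mat) q (B : Mat) : R -> Prop :=
  fun s => exists N m e, orthonormal N m e /\
    s = fsum m (fun k => Rabs (p * qf N (e k) A - q * qf N (e k) B)).

Definition tdist (x y : Mat) := tnorm (Msub x y).

Lemma quad_ext N v A B : (forall j k, A j k = B j k) -> quad N v A = quad N v B.
Proof.
  intros H. unfold quad. apply Csum_ext; intros. apply Csum_ext; intros. rewrite H; reflexivity.
Qed.

Lemma Cmod_real z : im z = 0 -> Cmod z = Rabs (re z).
Proof.
  intros H. unfold Cmod. rewrite H. replace (re z ^ 2 + 0 ^ 2) with (Rsqr (re z)).
  - apply sqrt_Rsqr_abs.
  - unfold Rsqr; ring.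
Qed.

Lemma Cmod_quad_comb N v p q A B : herm A -> herm B ->
  Cmod (quad N v (Msub (Mscale p A) (Mscale q B))) = Rabs (p * qf N v A - q * qf N v B).
Proof.
  intros HA HB. unfold Msub, Mscale.
  rewrite (quad_ext N v _ (fun j k => Csub (Cmul (mkC p 0) (A j k)) (Cmul (mkC q 0) (B j k)))).
  2:{ intros; rewrite !Cscale_mul; reflexivity. }
  rewrite quad_lin, Cmod_real; unfold Csub, Cmul, qf; simpl;
    rewrite (quad_im N v A HA), (quad_im N v B HB); [f_equal|]; ring.
Qed.

Lemma tnorm_comb p q A B : herm A -> herm B ->
  tnorm (Msub (Mscale p A) (Mscale q B)) = Rsup (tnorm_sums p A q B).
Proof.
  intros HA HB. unfold tnorm. apply Rsup_ext. intros s.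
  split; intros (N & m & e & Ho & Hs); exists N, m, e; split; auto; rewrite Hs;
    apply fsum_ext; intros k _; rewrite Cmod_quad_comb; auto.
Qed.

Lemma Mscale_1 A : Mscale 1 A = A.
Proof.
  apply functional_extensionality; intros j; apply functional_extensionality; intros k.
  apply C_ext; unfold Mscale, Cscale; simpl; ring.
Qed.

Lemma tdist_comb x y : tdist x y = tnorm (Msub (Mscale 1 x) (Mscale 1 y)).
Proof. unfold tdist. rewrite !Mscale_1. reflexivity. Qed.

Lemma orthonormal_nil : orthonormal 0 0 (fun _ _ => C0).
Proof. intros k l Hk; lia. Qed.

Lemma tnorm_ge0 A : 0 <= tnorm A.
Proof.
  unfold tnorm, Rsup. destruct (excluded_middle_informative _) as [H|H]; [|lra].
  apply (proj2_sig (constructive_indefinite_description _ H)).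
  exists 0%nat, 0%nat, (fun _ _ => C0). split; [apply orthonormal_nil|reflexivity].
Qed.

Lemma tnorm_sums_ne p A q B : exists s, tnorm_sums p A q B s.
Proof. exists 0, 0%nat, 0%nat, (fun _ _ => C0). split; [apply orthonormal_nil|reflexivity]. Qed.

Lemma Rabs_scale_sub P a b : 0 <= P -> Rabs (P * a - P * b) = P * Rabs (1 * a - 1 * b).
Proof.
  intros HP. replace (P * a - P * b) with (P * (1 * a - 1 * b)) by ring.
  rewrite Rabs_mult, Rabs_right; lra.
Qed.

Section States.
Variable dim : option nat.

Lemma state_herm x : is_state dim x -> herm x.
Proof. intros (H & _); exact H. Qed.

Lemma state_qf_ge0 x N v : is_state dim x -> 0 <= qf N v x.
Proof. intros (_ & H & _). apply H. Qed.

Lemma state_diag_ge0 x j : is_state dim x -> 0 <= re (x j j).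
Proof. intros Hx. rewrite <- (quad_basis (S j) j x) by lia. apply (state_qf_ge0 _ _ _ Hx). Qed.

Lemma state_fsum_qf_le1 x N m e : is_state dim x -> orthonormal N m e ->
  fsum m (fun k => qf N (e k) x) <= 1.
Proof.
  intros Hx Ho. eapply Rle_trans; [apply quad_fsum_le_trace; eauto; apply Hx|].
  apply isum_fsum_le; [intros; apply (state_diag_ge0 _ _ Hx)|apply Hx].
Qed.

Lemma tnorm_sums_bounds p x q y s : is_state dim x -> is_state dim y ->
  tnorm_sums p x q y s -> 0 <= s <= Rabs p + Rabs q.
Proof.
  intros Hx Hy (N & m & e & Ho & ->). split; [apply fsum_ge0; intros; apply Rabs_pos|].
  eapply Rle_trans.
  - apply (fsum_le m _ (fun k => Rabs p * qf N (e k) x + Rabs q * qf N (e k) y)).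
    intros k _. eapply Rle_trans; [apply Rabs_triang|]. rewrite Rabs_Ropp, !Rabs_mult.
    rewrite (Rabs_right (qf N (e k) x)), (Rabs_right (qf N (e k) y)); try lra;
      apply Rle_ge, state_qf_ge0; assumption.
  - rewrite fsum_plus, !fsum_scal.
    generalize (state_fsum_qf_le1 _ _ _ _ Hx Ho) (state_fsum_qf_le1 _ _ _ _ Hy Ho)
      (Rabs_pos p) (Rabs_pos q).
    nra.
Qed.

Lemma tnorm_comb_ge p q x y s : is_state dim x -> is_state dim y ->
  tnorm_sums p x q y s -> s <= tnorm (Msub (Mscale p x) (Mscale q y)).
Proof.
  intros Hx Hy Hs. rewrite tnorm_comb by (apply state_herm; assumption).
  apply Rsup_ub; auto.
  exists (Rabs p + Rabs q). intros s' Hs'. apply (tnorm_sums_bounds _ _ _ _ _ Hx Hy Hs').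
Qed.

Lemma tnorm_comb_le p q x y b : is_state dim x -> is_state dim y ->
  (forall s, tnorm_sums p x q y s -> s <= b) -> tnorm (Msub (Mscale p x) (Mscale q y)) <= b.
Proof.
  intros Hx Hy Hb. rewrite tnorm_comb by (apply state_herm; assumption).
  apply Rsup_le; auto using tnorm_sums_ne.
Qed.

Lemma tnorm_comb_bounds p q x y : is_state dim x -> is_state dim y ->
  0 <= tnorm (Msub (Mscale p x) (Mscale q y)) <= Rabs p + Rabs q.
Proof.
  intros Hx Hy. split; [apply tnorm_ge0|].
  apply tnorm_comb_le; auto. intros s Hs. apply (tnorm_sums_bounds _ _ _ _ _ Hx Hy Hs).
Qed.

Lemma tdist_bounds x y : is_state dim x -> is_state dim y -> 0 <= tdist x y <= 2.
Proof.
  intros Hx Hy. rewrite tdist_comb.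
  generalize (tnorm_comb_bounds 1 1 x y Hx Hy). rewrite Rabs_R1; lra.
Qed.

Lemma tnorm_comb_same P x y : is_state dim x -> is_state dim y -> 0 <= P ->
  tnorm (Msub (Mscale P x) (Mscale P y)) = P * tdist x y.
Proof.
  intros Hx Hy HP. rewrite tdist_comb. apply Rle_antisym.
  - apply tnorm_comb_le; auto. intros s (N & m & e & Ho & ->).
    rewrite (fsum_ext _ _ (fun k => P * Rabs (1 * qf N (e k) x - 1 * qf N (e k) y)))
      by (intros; apply Rabs_scale_sub; auto).
    rewrite fsum_scal. apply Rmult_le_compat_l; auto.
    apply tnorm_comb_ge; auto. exists N, m, e; split; auto.
  - destruct (Req_dec P 0) as [->|HP0].
    { rewrite Rmult_0_l. apply tnorm_ge0. }
    set (T := tnorm (Msub (Mscale P x) (Mscale P y))).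
    assert (HT : tnorm (Msub (Mscale 1 x) (Mscale 1 y)) <= T / P).
    { apply tnorm_comb_le; auto. intros s (N & m & e & Ho & ->).
      apply (Rmult_le_reg_l P); [lra|]. replace (P * (T / P)) with T by (field; lra).
      rewrite <- fsum_scal. apply tnorm_comb_ge; auto. exists N, m, e; split; auto.
      apply fsum_ext; intros k _. symmetry; apply Rabs_scale_sub; auto. }
    apply (Rmult_le_compat_l P) in HT; [|lra].
    replace (P * (T / P)) with T in HT by (field; lra). lra.
Qed.

Lemma tdist_triangle x y z : is_state dim x -> is_state dim y -> is_state dim z ->
  tdist x z <= tdist x y + tdist y z.
Proof.
  intros Hx Hy Hz. rewrite !tdist_comb. apply tnorm_comb_le; auto.
  intros s (N & m & e & Ho & ->).
  eapply Rle_trans.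
  - apply (fsum_le m _ (fun k => Rabs (1 * qf N (e k) x - 1 * qf N (e k) y) +
                                 Rabs (1 * qf N (e k) y - 1 * qf N (e k) z))).
    intros k _. eapply Rle_trans; [|apply Rabs_triang]. right; f_equal; ring.
  - rewrite fsum_plus. apply Rplus_le_compat; apply tnorm_comb_ge; auto; exists N, m, e; auto.
Qed.

Lemma tdist_sym x y : is_state dim x -> is_state dim y -> tdist x y = tdist y x.
Proof.
  intros Hx Hy. rewrite !tdist_comb, !tnorm_comb by (apply state_herm; assumption).
  apply Rsup_ext. intros s.
  split; intros (N & m & e & Ho & ->); exists N, m, e; split; auto;
    apply fsum_ext; intros; apply Rabs_minus_sym.
Qed.

Lemma tdist_refl x : is_state dim x -> tdist x x = 0.
Proof.
  intros Hx. apply Rle_antisym; [|apply tnorm_ge0]. rewrite tdist_comb.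
  apply tnorm_comb_le; auto. intros s (N & m & e & Ho & ->).
  rewrite (fsum_ext _ _ (fun _ => 0)), fsum_zero; [lra|].
  intros; rewrite Rminus_diag, Rabs_R0; reflexivity.
Qed.

(* Test against the first [n] basis vectors, on which both traces are close to 1. *)
Lemma Rabs_sub_le_tnorm_comb p q x y : is_state dim x -> is_state dim y ->
  Rabs (p - q) <= tnorm (Msub (Mscale p x) (Mscale q y)).
Proof.
  intros Hx Hy. apply Rnot_lt_le; intros Hlt.
  set (T := tnorm (Msub (Mscale p x) (Mscale q y))) in *.
  set (eps := (Rabs (p - q) - T) / (Rabs p + Rabs q + 1)).
  assert (Hpq : 0 < Rabs p + Rabs q + 1) by (generalize (Rabs_pos p) (Rabs_pos q); lra).
  assert (He : 0 < eps) by (apply Rdiv_lt_0_compat; lra).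
  assert (Heps : eps * (Rabs p + Rabs q + 1) = Rabs (p - q) - T) by (unfold eps; field; lra).
  destruct (isum_tail _ _ _ (proj2 (proj2 (proj2 Hx))) He) as [K1 HK1].
  destruct (isum_tail _ _ _ (proj2 (proj2 (proj2 Hy))) He) as [K2 HK2].
  set (n := (K1 + K2)%nat).
  assert (E1 := HK1 n ltac:(unfold n; lia)). assert (E2 := HK2 n ltac:(unfold n; lia)).
  assert (Hs : fsum n (fun k => Rabs (p * re (x k k) - q * re (y k k))) <= T).
  { apply tnorm_comb_ge; auto. exists n, n, basis. split; [apply basis_orthonormal|].
    apply fsum_ext; intros k Hk. unfold qf. rewrite !quad_basis by auto. reflexivity. }
  generalize (fsum_abs n (fun k => p * re (x k k) - q * re (y k k))).
  rewrite fsum_minus, !fsum_scal. intros Habs.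
  set (A := fsum n (fun k => re (x k k))) in *. set (B := fsum n (fun k => re (y k k))) in *.
  assert (Rabs (p - q) <= Rabs (p * A - q * B) + Rabs p * Rabs (1 - A) + Rabs q * Rabs (B - 1)).
  { rewrite <- !Rabs_mult. eapply Rle_trans; [|apply Rplus_le_compat_r; apply Rabs_triang].
    eapply Rle_trans; [|apply Rabs_triang]. right; f_equal; ring. }
  assert (Rabs p * Rabs (1 - A) <= Rabs p * eps)
    by (apply Rmult_le_compat_l; [apply Rabs_pos|rewrite Rabs_minus_sym; lra]).
  assert (Rabs q * Rabs (B - 1) <= Rabs q * eps)
    by (apply Rmult_le_compat_l; [apply Rabs_pos|lra]).
  nra.
Qed.

Lemma tdist_weighted_le p q x y : is_state dim x -> is_state dim y -> 0 <= p -> 0 <= q ->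
  q * tdist y x <= tnorm (Msub (Mscale p x) (Mscale q y)) + Rabs (p - q).
Proof.
  intros Hx Hy Hp Hq. rewrite <- tnorm_comb_same by auto.
  apply tnorm_comb_le; auto. intros s (N & m & e & Ho & ->).
  eapply Rle_trans.
  - apply (fsum_le m _ (fun k => Rabs (p * qf N (e k) x - q * qf N (e k) y) +
                                 Rabs (p - q) * qf N (e k) x)).
    intros k _. assert (0 <= qf N (e k) x) by (apply state_qf_ge0; auto).
    replace (q * qf N (e k) y - q * qf N (e k) x)
      with (- ((p * qf N (e k) x - q * qf N (e k) y) + - ((p - q) * qf N (e k) x))) by ring.
    rewrite Rabs_Ropp. eapply Rle_trans; [apply Rabs_triang|].
    rewrite Rabs_Ropp, Rabs_mult, (Rabs_right (qf N (e k) x)) by lra. lra.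
  - rewrite fsum_plus, fsum_scal. apply Rplus_le_compat.
    + apply tnorm_comb_ge; auto. exists N, m, e; split; auto.
    + generalize (state_fsum_qf_le1 _ _ _ _ Hx Ho) (Rabs_pos (p - q)). nra.
Qed.

End States.

(** * Nonnegative double series *)

(* Enumeration of [nat * nat] along square shells: the indices
   [n * n <= k < (n + 1) * (n + 1)] list [(0, n), ..., (n - 1, n), (n, 0), ..., (n, n)],
   so the first [n * n] terms exhaust the square [n * n]. *)
Definition unpair_sq (k : nat) : nat * nat :=
  let n := Nat.sqrt k in let t := (k - n * n)%nat in
  if Nat.ltb t n then (t, n) else (n, (t - n)%nat).

Definition flat {T} (a : nat -> nat -> T) (k : nat) : T :=
  a (fst (unpair_sq k)) (snd (unpair_sq k)).

Definition square_sum (a : nat -> nat -> R) n := fsum n (fun i => fsum n (fun j => a i j)).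

Lemma fsum_flat_square (a : nat -> nat -> R) n : fsum (n * n) (flat a) = square_sum a n.
Proof.
  unfold flat. induction n; [reflexivity|].
  replace (S n * S n)%nat with (n * n + (n + S n))%nat by lia.
  rewrite fsum_add_range, IHn, fsum_add_range. unfold square_sum. simpl.
  rewrite fsum_plus.
  rewrite (fsum_ext n (fun t => a (fst (unpair_sq (n * n + t))) (snd (unpair_sq (n * n + t))))
             (fun t => a t n)).
  2:{ intros t Ht. unfold unpair_sq. rewrite (Nat.sqrt_unique _ n) by lia.
      replace (n * n + t - n * n)%nat with t by lia.
      destruct (Nat.ltb_spec t n); [reflexivity|lia]. }
  rewrite (fsum_ext n (fun t => a (fst (unpair_sq (n * n + (n + t))))
                                  (snd (unpair_sq (n * n + (n + t))))) (fun t => a n t)).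
  2:{ intros t Ht. unfold unpair_sq. rewrite (Nat.sqrt_unique _ n) by lia.
      replace (n * n + (n + t) - n * n)%nat with (n + t)%nat by lia.
      destruct (Nat.ltb_spec (n + t) n); [lia|]. simpl. f_equal; lia. }
  replace (unpair_sq (n * n + (n + n))) with (n, n).
  2:{ unfold unpair_sq. rewrite (Nat.sqrt_unique _ n) by lia.
      replace (n * n + (n + n) - n * n)%nat with (n + n)%nat by lia.
      destruct (Nat.ltb_spec (n + n) n); [lia|]. f_equal; lia. }
  simpl. ring.
Qed.

Section Tonelli.
Variable a : nat -> nat -> R.
Hypothesis a_ge0 : forall i j, 0 <= a i j.

Lemma isum_flat_of_squares s : (forall n, square_sum a n <= s) ->
  (forall eps, 0 < eps -> exists n0, s - eps <= square_sum a n0) ->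
  infinite_sum (flat a) s.
Proof.
  intros Hup Hlo. apply isum_of_fsum. intros eps He.
  destruct (Hlo (eps / 2)) as [n0 Hn0]; [lra|].
  exists (n0 * n0)%nat. intros K HK.
  assert (H1 : fsum (n0 * n0) (flat a) <= fsum K (flat a))
    by (apply fsum_mono; [lia|intros; apply a_ge0]).
  assert (H2 : fsum K (flat a) <= fsum (K * K) (flat a))
    by (apply fsum_mono; [nia|intros; apply a_ge0]).
  rewrite fsum_flat_square in H1, H2. specialize (Hup K).
  apply Rabs_def1; lra.
Qed.

Lemma fsum_rows_approx r : (forall i, infinite_sum (a i) (r i)) ->
  forall I eps, 0 < eps -> exists J, fsum I r - eps <= fsum I (fun i => fsum J (a i)).
Proof.
  intros Hr I. induction I; intros eps He.
  - exists 0%nat. simpl; lra.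
  - destruct (IHI (eps / 2)) as [J1 HJ1]; [lra|].
    destruct (isum_tail _ _ (eps / 2) (Hr I) ltac:(lra)) as [J2 HJ2].
    exists (J1 + J2)%nat. simpl.
    assert (fsum I (fun i => fsum J1 (a i)) <= fsum I (fun i => fsum (J1 + J2) (a i))).
    { apply fsum_le; intros. apply fsum_mono; auto; lia. }
    specialize (HJ2 (J1 + J2)%nat ltac:(lia)). apply Rabs_def2 in HJ2. lra.
Qed.

Lemma square_sum_rows r s : (forall i, infinite_sum (a i) (r i)) -> infinite_sum r s ->
  (forall n, square_sum a n <= s) /\ (forall eps, 0 < eps -> exists n0, s - eps <= square_sum a n0).
Proof.
  intros Hr Hs.
  assert (Hr0 : forall i, 0 <= r i). { intros i; eapply isum_ge0; [|apply Hr]. auto. }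
  split.
  - intros n. unfold square_sum. eapply Rle_trans; [|apply (isum_fsum_le r s n); auto].
    apply fsum_le; intros i _. apply isum_fsum_le; auto.
  - intros eps He. destruct (isum_tail _ _ (eps / 2) Hs ltac:(lra)) as [I HI].
    destruct (fsum_rows_approx r Hr I (eps / 2)) as [J HJ]; [lra|].
    exists (I + J)%nat. specialize (HI I ltac:(lia)). apply Rabs_def2 in HI.
    assert (fsum I (fun i => fsum J (a i)) <= square_sum a (I + J)).
    { unfold square_sum. eapply Rle_trans.
      apply fsum_le; intros i _. apply (fsum_mono J (I + J) (a i)); auto; lia.
      apply fsum_mono; [lia|]. intros; apply fsum_ge0; auto. }
    lra.
Qed.

Lemma isum_flat_rows r s : (forall i, infinite_sum (a i) (r i)) -> infinite_sum r s ->
  infinite_sum (flat a) s.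
Proof. intros H1 H2. destruct (square_sum_rows r s H1 H2). apply isum_flat_of_squares; auto. Qed.

End Tonelli.

Lemma square_sum_transpose a n : square_sum (fun j i => a i j) n = square_sum a n.
Proof. unfold square_sum. rewrite fsum_swap. reflexivity. Qed.

Lemma isum_flat_cols a c s : (forall i j, 0 <= a i j) ->
  (forall j, infinite_sum (fun i => a i j) (c j)) -> infinite_sum c s ->
  infinite_sum (flat a) s.
Proof.
  intros H0 H1 H2.
  destruct (square_sum_rows (fun j i => a i j) (fun j i => H0 i j) c s H1 H2) as [Hu Hl].
  apply isum_flat_of_squares; auto.
  - intros n; rewrite <- square_sum_transpose; auto.
  - intros eps He; destruct (Hl eps He) as [n0 Hn0].
    exists n0; rewrite <- square_sum_transpose; auto.
Qed.

Lemma isum_cols_of_rows a r s : (forall i j, 0 <= a i j) ->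
  (forall i, infinite_sum (a i) (r i)) -> infinite_sum r s ->
  exists c, (forall j, infinite_sum (fun i => a i j) (c j)) /\ infinite_sum c s.
Proof.
  intros H0 Hr Hs. destruct (square_sum_rows a H0 r s Hr Hs) as [Hu _].
  assert (Hc : forall j, exists cj, infinite_sum (fun i => a i j) cj).
  { intros j. apply (isum_bounded _ s); auto. intros n.
    eapply Rle_trans; [|apply (Hu (n + S j)%nat)]. unfold square_sum.
    eapply Rle_trans; [|apply (fsum_mono n (n + S j)); [lia|intros; apply fsum_ge0; auto]].
    apply fsum_le; intros i _.
    eapply Rle_trans; [|apply (fsum_mono (S j) (n + S j)); auto; lia]. simpl.
    generalize (fsum_ge0 j (fun j0 => a i j0) ltac:(intros; auto)); lra. }
  destruct (choice _ Hc) as [c Hcj].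
  assert (Hc0 : forall j, 0 <= c j)
    by (intros j; apply (isum_ge0 (fun i => a i j)); [intros; apply H0|apply Hcj]).
  destruct (isum_bounded c s Hc0) as [s' Hs'].
  { intros J. generalize (isum_fsum J (fun j i => a i j) c (fun j _ => Hcj j)). intros HJ.
    apply (isum_le_bound _ _ _ HJ). intros n.
    eapply Rle_trans; [|apply (Hu (n + J)%nat)]. unfold square_sum.
    eapply Rle_trans; [|apply (fsum_mono n (n + J)); [lia|intros; apply fsum_ge0; auto]].
    apply fsum_le; intros i _. apply (fsum_mono J (n + J) (fun c => a i c)); auto; lia. }
  exists c; split; auto.
  assert (s' = s); [|subst; auto].
  eapply uniqueness_sum. apply (isum_flat_cols a c s' H0 Hcj Hs').
  apply (isum_flat_rows a H0 r s Hr Hs).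
Qed.

Definition indicator (S : Mat -> Prop) (rho : nat -> Mat) (p : nat -> R) (i : nat) : R :=
  if excluded_middle_informative (S (rho i)) then p i else 0.

Lemma indicator_bounds (S : Mat -> Prop) rho p i : 0 <= p i ->
  0 <= indicator S rho p i <= p i.
Proof. intros H. unfold indicator. destruct (excluded_middle_informative _); lra. Qed.

Lemma ens_measure_sum p rho S : (forall i, 0 <= p i) -> infinite_sum p 1 ->
  infinite_sum (indicator S rho p) (ens_measure p rho S).
Proof.
  intros H0 H1. apply series_sum, (isum_dominated _ p 1); auto.
  intros; apply indicator_bounds; auto.
Qed.

Lemma weight_le_atom p rho i : (forall i, 0 <= p i) -> infinite_sum p 1 ->
  p i <= ens_measure p rho (fun y => y = rho i).
Proof.
  intros H0 H1.
  generalize (isum_term_le _ _ i (fun j => proj1 (indicator_bounds _ rho p j (H0 j)))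
                (ens_measure_sum p rho (fun y => y = rho i) H0 H1)).
  unfold indicator; destruct (excluded_middle_informative _); tauto.
Qed.

Lemma series_ext a b : (forall i, a i = b i) -> series a = series b.
Proof. intros H. f_equal. apply functional_extensionality, H. Qed.

Lemma double_series_dominated a b r s : (forall i j, 0 <= a i j <= b i j) ->
  (forall i, infinite_sum (b i) (r i)) -> infinite_sum r s ->
  infinite_sum (flat a) (series (fun i => series (a i))) /\
  series (fun i => series (a i)) <= s.
Proof.
  intros Hab Hb Hr.
  assert (Ha : forall i, infinite_sum (a i) (series (a i)) /\ series (a i) <= r i).
  { intros i. destruct (isum_dominated (a i) (b i) (r i)) as [l Hl]; auto.
    rewrite (series_eq _ _ Hl). split; auto.
    apply (isum_le _ _ _ _ (fun j => proj2 (Hab i j)) Hl (Hb i)). }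
  assert (Hdom : forall i, 0 <= series (a i) <= r i).
  { intros i. split; [apply series_ge0; intros; apply Hab|apply Ha]. }
  destruct (isum_dominated _ r s Hdom Hr) as [t Ht].
  rewrite (series_eq _ _ Ht). split.
  - apply isum_flat_rows with (r := fun i => series (a i)); auto.
    + intros; apply Hab.
    + intros; apply Ha.
  - exact (isum_le _ _ _ _ (fun i => proj2 (Hdom i)) Ht Hr).
Qed.

Section Ensembles.
Variable dim : option nat.

Lemma ensemble_summable p rho g G : is_ensemble dim p rho ->
  (forall i, Rabs (g i) <= G) -> exists l, infinite_sum (fun i => p i * g i) l.
Proof.
  intros (H0 & H1 & _) Hg. apply (isum_abs_dominated _ (fun i => G * p i) (G * 1)).
  - intros i. rewrite Rabs_mult, Rabs_right, Rmult_comm by (apply Rle_ge; auto).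
    apply Rmult_le_compat_r; auto.
  - apply isum_scal; auto.
Qed.

(* Transport along the coupling [P i k = p i p' k [rho' k = rho i] / w (rho i)],
   [w x] the common weight of the atom [x]. *)
Lemma isum_same_measure p rho p' rho' (g : Mat -> R) s :
  is_ensemble dim p rho -> is_ensemble dim p' rho' -> same_measure p rho p' rho' ->
  (forall x, is_state dim x -> 0 <= g x) ->
  infinite_sum (fun i => p i * g (rho i)) s -> infinite_sum (fun k => p' k * g (rho' k)) s.
Proof.
  intros (Hp0 & Hp1 & Hst) (Hp0' & Hp1' & Hst') Hsm Hg Hs.
  set (w := fun x => ens_measure p rho (fun y => y = x)).
  assert (Hw : forall x, infinite_sum (indicator (fun y => y = x) rho p) (w x))
    by (intros; apply ens_measure_sum; auto).
  assert (Hw' : forall x, infinite_sum (indicator (fun y => y = x) rho' p') (w x))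
    by (intros x; unfold w; rewrite Hsm; apply ens_measure_sum; auto).
  assert (Hpw : forall i, 0 <= p i <= w (rho i)) by (split; [|apply weight_le_atom]; auto).
  assert (Hpw' : forall k, 0 <= p' k <= w (rho' k))
    by (split; [|unfold w; rewrite Hsm; apply weight_le_atom]; auto).
  set (a := fun i k => p i / w (rho i) * g (rho i) * indicator (fun y => y = rho i) rho' p' k).
  assert (Ha0 : forall i k, 0 <= a i k).
  { intros i k. apply Rmult_le_pos; [apply Rmult_le_pos|apply indicator_bounds; auto].
    - apply Rdiv_bounded_01; auto.
    - apply Hg; auto. }
  assert (Hrow : forall i, infinite_sum (a i) (p i * g (rho i))).
  { intros i. replace (p i * g (rho i)) with (p i / w (rho i) * g (rho i) * w (rho i))
      by (rewrite <- (Rdiv_mul_bounded (p i) (w (rho i))) at 2 by auto; ring).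
    apply isum_scal, Hw'. }
  destruct (isum_cols_of_rows a _ s Ha0 Hrow Hs) as [c [Hc Hcs]].
  apply (isum_ext c); auto. intros k. eapply uniqueness_sum; [apply Hc|].
  replace (p' k * g (rho' k)) with (p' k / w (rho' k) * g (rho' k) * w (rho' k))
    by (rewrite <- (Rdiv_mul_bounded (p' k) (w (rho' k))) at 2 by auto; ring).
  eapply isum_ext; [|apply isum_scal, (Hw (rho' k))]. intros i. unfold a, indicator.
  destruct (excluded_middle_informative (rho i = rho' k)) as [E|E];
    destruct (excluded_middle_informative (rho' k = rho i)) as [E'|E'];
    [rewrite E|congruence|congruence|]; unfold Rdiv; ring.
Qed.

Lemma series_same_measure p rho p' rho' f M :
  is_ensemble dim p rho -> is_ensemble dim p' rho' -> same_measure p rho p' rho' ->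
  (forall x, is_state dim x -> Rabs (f x) <= M) ->
  series (fun i => p i * f (rho i)) = series (fun k => p' k * f (rho' k)).
Proof.
  intros Hp Hp' Hsm Hf.
  assert (Hg : forall x, is_state dim x -> 0 <= f x + M <= 2 * M).
  { intros x Hx; specialize (Hf x Hx); apply Rabs_le_between in Hf; lra. }
  destruct (ensemble_summable p rho (fun i => f (rho i) + M) (2 * M) Hp) as [s Hs].
  { intros i. rewrite Rabs_right by (apply Rle_ge, Hg, Hp). apply Hg, Hp. }
  assert (Hs' := isum_same_measure _ _ _ _ (fun x => f x + M) s Hp Hp' Hsm
                   (fun x Hx => proj1 (Hg x Hx)) Hs).
  rewrite (series_eq _ (s - M * 1)), (series_eq _ (s - M * 1)); auto;
    [eapply isum_ext; [|apply (isum_minus _ _ _ _ Hs' (isum_scal _ _ M (proj1 (proj2 Hp'))))]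
    |eapply isum_ext; [|apply (isum_minus _ _ _ _ Hs (isum_scal _ _ M (proj1 (proj2 Hp))))]];
    intros; simpl; ring.
Qed.

Lemma same_measure_flat_rows p rho P : (forall i j, 0 <= P i j) ->
  (forall i, infinite_sum (P i) (p i)) -> infinite_sum p 1 ->
  same_measure p rho (flat P) (fun k => rho (fst (unpair_sq k))).
Proof.
  intros HP Hrow Hp1 S.
  assert (Hp0 : forall i, 0 <= p i) by (intros i; apply (isum_ge0 (P i)); auto).
  symmetry. apply series_eq. eapply isum_ext; [intros; reflexivity|].
  apply (isum_flat_rows (fun i j => indicator S rho (fun i => P i j) i)
           (fun i j => proj1 (indicator_bounds S rho _ i (HP i j))) (indicator S rho p));
    [|apply ens_measure_sum; auto].
  intros i. unfold indicator.
  destruct (excluded_middle_informative _); [apply Hrow|apply isum_zero].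
Qed.

Lemma same_measure_flat_cols q sigma P : (forall i j, 0 <= P i j) ->
  (forall j, infinite_sum (fun i => P i j) (q j)) -> infinite_sum q 1 ->
  same_measure q sigma (flat P) (fun k => sigma (snd (unpair_sq k))).
Proof.
  intros HP Hcol Hq1 S.
  assert (Hq0 : forall j, 0 <= q j) by (intros j; apply (isum_ge0 (fun i => P i j)); auto).
  symmetry. apply series_eq. eapply isum_ext; [intros; reflexivity|].
  apply (isum_flat_cols (fun i j => indicator S sigma (P i) j) (indicator S sigma q));
    [intros; apply indicator_bounds; auto| |apply ens_measure_sum; auto].
  intros j. unfold indicator.
  destruct (excluded_middle_informative _); [apply Hcol|apply isum_zero].
Qed.

Lemma D0_ge0 p rho q sigma : 0 <= D0 p rho q sigma.
Proof. unfold D0. apply Rmult_le_pos; [lra|]. apply series_ge0; intros; apply tnorm_ge0. Qed.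

Lemma Dstar_lb p rho q sigma :
  exists m, forall x, (exists p' rho' q' sigma', is_ensemble dim p' rho' /\
    same_measure p rho p' rho' /\ is_ensemble dim q' sigma' /\
    same_measure q sigma q' sigma' /\ x = D0 p' rho' q' sigma') -> m <= x.
Proof. exists 0. intros x (? & ? & ? & ? & _ & _ & _ & _ & ->). apply D0_ge0. Qed.

Lemma Dstar_ne p rho q sigma : is_ensemble dim p rho -> is_ensemble dim q sigma ->
  exists x p' rho' q' sigma', is_ensemble dim p' rho' /\
    same_measure p rho p' rho' /\ is_ensemble dim q' sigma' /\
    same_measure q sigma q' sigma' /\ x = D0 p' rho' q' sigma'.
Proof.
  intros Hp Hq. exists (D0 p rho q sigma), p, rho, q, sigma.
  split; [exact Hp|split; [intros S; reflexivity|split; [exact Hq|split; [intros S|]]]];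
    reflexivity.
Qed.

Lemma Dstar_ge0 p rho q sigma : is_ensemble dim p rho -> is_ensemble dim q sigma ->
  0 <= Dstar dim p rho q sigma.
Proof.
  intros Hp Hq. apply Rinf_ge; [apply Dstar_ne; auto|].
  intros x (? & ? & ? & ? & _ & _ & _ & _ & ->). apply D0_ge0.
Qed.

Lemma Dstar_approx p rho q sigma eta :
  is_ensemble dim p rho -> is_ensemble dim q sigma -> Dstar dim p rho q sigma < eta ->
  exists p' rho' q' sigma', is_ensemble dim p' rho' /\ same_measure p rho p' rho' /\
    is_ensemble dim q' sigma' /\ same_measure q sigma q' sigma' /\ D0 p' rho' q' sigma' < eta.
Proof.
  intros Hp Hq HD.
  destruct (Rinf_approx _ (eta - Dstar dim p rho q sigma) (Dstar_ne p rho q sigma Hp Hq))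
    as [x [Hx Hlt]]; [lra|].
  destruct Hx as (p' & rho' & q' & sigma' & H1 & H2 & H3 & H4 & ->).
  exists p', rho', q', sigma'. do 4 (split; [assumption|]). unfold Dstar in Hlt. lra.
Qed.

Definition coupling (p q : nat -> R) (P : nat -> nat -> R) : Prop :=
  (forall i j, 0 <= P i j) /\
  (forall i, infinite_sum (fun j => P i j) (p i)) /\
  (forall j, infinite_sum (fun i => P i j) (q j)).

Lemma DK_le_coupling p rho q sigma P : coupling p q P ->
  DK p rho q sigma <= / 2 * series (fun i => series (fun j => P i j * tdist (rho i) (sigma j))).
Proof.
  intros (HP & Hrow & Hcol). apply Rinf_lb; [|exists P; repeat split; auto].
  exists 0. intros x (P' & HP' & _ & _ & ->). apply Rmult_le_pos; [lra|].
  apply series_ge0; intros; apply series_ge0; intros. apply Rmult_le_pos; auto. apply tnorm_ge0.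
Qed.

Lemma product_coupling p rho q sigma : is_ensemble dim p rho -> is_ensemble dim q sigma ->
  coupling p q (fun i j => p i * q j).
Proof.
  intros (Hp0 & Hp1 & _) (Hq0 & Hq1 & _). split; [|split].
  - intros; apply Rmult_le_pos; auto.
  - intros i. generalize (isum_scal _ _ (p i) Hq1). rewrite Rmult_1_r. auto.
  - intros j. generalize (isum_scal _ _ (q j) Hp1). rewrite Rmult_1_r.
    apply isum_ext. intros; ring.
Qed.

Lemma DK_ge0 p rho q sigma : is_ensemble dim p rho -> is_ensemble dim q sigma ->
  0 <= DK p rho q sigma.
Proof.
  intros Hp Hq. destruct (product_coupling p rho q sigma Hp Hq) as (H1 & H2 & H3).
  apply Rinf_ge; [eexists; exists (fun i j => p i * q j); repeat split; eauto|].
  intros x (P & HP & _ & _ & ->). apply Rmult_le_pos; [lra|].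
  apply series_ge0; intros; apply series_ge0; intros. apply Rmult_le_pos; auto. apply tnorm_ge0.
Qed.

Lemma Dstar_le_coupling p rho q sigma P :
  is_ensemble dim p rho -> is_ensemble dim q sigma -> coupling p q P ->
  Dstar dim p rho q sigma <=
    / 2 * series (fun i => series (fun j => P i j * tdist (rho i) (sigma j))).
Proof.
  intros (Hp0 & Hp1 & Hst1) (Hq0 & Hq1 & Hst2) (HP & Hrow & Hcol).
  set (cost := fun i j => P i j * tdist (rho i) (sigma j)).
  assert (Hcost : forall i j, 0 <= cost i j <= 2 * P i j).
  { intros i j. generalize (tdist_bounds dim _ _ (Hst1 i) (Hst2 j)) (HP i j). unfold cost; nra. }
  destruct (double_series_dominated cost (fun i j => 2 * P i j) (fun i => 2 * p i) 2)
    as [Hflat _]; auto.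
  { intros i; apply isum_scal, Hrow. }
  { generalize (isum_scal _ _ 2 Hp1). rewrite Rmult_1_r. auto. }
  apply Rinf_lb; [apply Dstar_lb|].
  exists (flat P), (fun k => rho (fst (unpair_sq k))),
         (flat P), (fun k => sigma (snd (unpair_sq k))).
  split; [split; [intros; apply HP|split; [apply (isum_flat_rows P HP p 1 Hrow Hp1)|auto]]|].
  split; [apply same_measure_flat_rows; auto|].
  split; [split; [intros; apply HP|split; [apply (isum_flat_cols P q 1 HP Hcol Hq1)|auto]]|].
  split; [apply same_measure_flat_cols; auto|].
  unfold D0. f_equal. unfold cost in Hflat. rewrite <- (series_eq _ _ Hflat).
  apply series_ext; intros k.
    unfold flat. rewrite (tnorm_comb_same dim); auto.
Qed.

Lemma Dstar_le_DK p rho q sigma :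
  is_ensemble dim p rho -> is_ensemble dim q sigma ->
  Dstar dim p rho q sigma <= DK p rho q sigma.
Proof.
  intros Hp Hq. destruct (product_coupling p rho q sigma Hp Hq) as (H1 & H2 & H3).
  apply Rinf_ge; [eexists; exists (fun i j => p i * q j); repeat split; eauto|].
  intros x (P & HP & Hr & Hc & ->). apply Dstar_le_coupling; auto. split; auto.
Qed.

End Ensembles.

(** * Convergence in [D_*] implies weak convergence *)

Lemma error_budget C M eps d m : 0 <= C -> 0 <= M -> 0 < eps ->
  0 <= d < eps / (8 * (C + 1)) -> m <= eps / (4 * (M + 1)) ->
  C * (2 * d) + eps / (4 * (M + 1)) + 2 * M * m < eps.
Proof.
  intros HC HM He [Hd0 Hd] Hm.
  assert (C * (2 * d) <= eps / 4).
  { apply Rle_trans with (C * (2 * (eps / (8 * (C + 1))))); [apply Rmult_le_compat_l; lra|].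
    apply (Rmult_le_reg_r (8 * (C + 1))); [lra|].
    replace (C * (2 * (eps / (8 * (C + 1)))) * (8 * (C + 1))) with (2 * C * eps) by (field; lra).
    nra. }
  assert (eps / (4 * (M + 1)) * (1 + 2 * M) <= eps / 2).
  { apply (Rmult_le_reg_r (4 * (M + 1))); [lra|].
    replace (eps / (4 * (M + 1)) * (1 + 2 * M) * (4 * (M + 1))) with (eps * (1 + 2 * M))
      by (field; lra).
    nra. }
  assert (2 * M * m <= 2 * M * (eps / (4 * (M + 1)))) by (apply Rmult_le_compat_l; lra).
  nra.
Qed.

Section DstarWeak.
Variable dim : option nat.

Lemma continuous_uniform_finite f (sigma : nat -> Mat) K eps :
  continuous_on_states dim f -> (forall j, is_state dim (sigma j)) -> 0 < eps ->
  exists delta, 0 < delta /\ forall j, (j < K)%nat -> forall x, is_state dim x ->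
    tdist (sigma j) x < delta -> Rabs (f (sigma j) - f x) < eps.
Proof.
  intros Hc Hs He. induction K.
  - exists 1; split; [lra|intros; lia].
  - destruct IHK as [d1 [Hd1 H1]].
    destruct (Hc (sigma K) (Hs K) eps He) as [d2 [Hd2 H2]].
    exists (Rmin d1 d2); split; [apply Rmin_pos; auto|].
    intros j Hj x Hx Hd. destruct (Nat.eq_dec j K) as [->|Hn].
    + apply H2; auto. eapply Rlt_le_trans; [exact Hd|apply Rmin_r].
    + apply H1; auto; [lia|]. eapply Rlt_le_trans; [exact Hd|apply Rmin_l].
Qed.

Lemma ens_measure_avoid_le q sigma K : is_ensemble dim q sigma ->
  ens_measure q sigma (fun x => forall j, (j < K)%nat -> x <> sigma j) <= 1 - fsum K q.
Proof.
  intros (H0 & H1 & _).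
  apply (isum_le (indicator (fun x => forall j, (j < K)%nat -> x <> sigma j) sigma q)
                 (fun j => q j - (if Nat.ltb j K then q j else 0)));
    [|apply ens_measure_sum; auto|].
  - intros j. unfold indicator.
    destruct (excluded_middle_informative _) as [E|E]; destruct (Nat.ltb_spec j K);
      try (specialize (H0 j); lra).
    exfalso; apply (E j); auto.
  - apply isum_minus; auto.
    replace (fsum K q) with (fsum K (fun j => if Nat.ltb j K then q j else 0)).
    + apply isum_finite. intros i Hi. destruct (Nat.ltb_spec i K); [lia|reflexivity].
    + apply fsum_ext; intros i Hi. destruct (Nat.ltb_spec i K); [reflexivity|lia].
Qed.

(* A far-away pair [x], [y] costs at least [q * delta / 2] in [tnorm (p x - q y)]. *)
Lemma weighted_diff_le f M e delta (S : Mat -> Prop) p q x y :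
  is_state dim x -> is_state dim y -> 0 <= p -> 0 <= q -> 0 <= e -> 0 < delta ->
  (forall z, is_state dim z -> Rabs (f z) <= M) ->
  (~ S y -> forall z, is_state dim z -> tdist y z < delta -> Rabs (f y - f z) < e) ->
  Rabs (p * f x - q * f y) <=
    (M + 4 * M / delta) * tnorm (Msub (Mscale p x) (Mscale q y)) + e * q +
    2 * M * (if excluded_middle_informative (S y) then q else 0).
Proof.
  intros Hx Hy Hp Hq He Hd Hf Hcont.
  set (g := tnorm (Msub (Mscale p x) (Mscale q y))).
  assert (Hg2 : Rabs (p - q) <= g) by (apply (Rabs_sub_le_tnorm_comb dim); auto).
  assert (Hg5 : q * tdist y x <= 2 * g).
  { generalize (tdist_weighted_le dim p q x y Hx Hy Hp Hq). fold g. lra. }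
  assert (Hfx := Hf x Hx). assert (Hfy := Hf y Hy).
  assert (HM : 0 <= M) by (generalize (Rabs_pos (f x)); lra).
  assert (Hdf : q * Rabs (f x - f y) <= 2 * M * q).
  { rewrite Rmult_comm. apply Rmult_le_compat_r; auto.
    eapply Rle_trans; [apply Rabs_triang|]. rewrite Rabs_Ropp. lra. }
  assert (Hsplit : Rabs (p * f x - q * f y) <= M * g + q * Rabs (f x - f y)).
  { replace (p * f x - q * f y) with ((p - q) * f x + q * (f x - f y)) by ring.
    eapply Rle_trans; [apply Rabs_triang|]. rewrite !Rabs_mult, (Rabs_right q) by lra.
    apply Rplus_le_compat_r. generalize (Rabs_pos (p - q)) (Rabs_pos (f x)). nra. }
  assert (HMd : 0 <= 4 * M / delta) by (apply Rdiv_nonneg; lra).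
  assert (Hg0 : 0 <= g) by apply tnorm_ge0.
  assert (0 <= e * q) by nra. assert (0 <= 4 * M / delta * g) by nra.
  destruct (excluded_middle_informative (S y)) as [Hin|Hout]; [nra|].
  destruct (Rlt_le_dec (tdist y x) delta) as [Hlt|Hge].
  - assert (Habs := Hcont Hout x Hx Hlt). rewrite Rabs_minus_sym in Habs. nra.
  - assert (q * delta <= 2 * g) by nra.
    assert (2 * M * q <= 4 * M / delta * g); [|nra].
    apply (Rmult_le_reg_r delta); auto.
    replace (4 * M / delta * g * delta) with (2 * M * (2 * g)) by (field; lra). nra.
Qed.

Lemma integral_diff_le p rho q sigma f M e delta S :
  is_ensemble dim p rho -> is_ensemble dim q sigma -> 0 <= e -> 0 < delta ->
  (forall z, is_state dim z -> Rabs (f z) <= M) ->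
  (forall k, ~ S (sigma k) -> forall z, is_state dim z ->
     tdist (sigma k) z < delta -> Rabs (f (sigma k) - f z) < e) ->
  Rabs (series (fun k => p k * f (rho k)) - series (fun k => q k * f (sigma k))) <=
    (M + 4 * M / delta) * (2 * D0 p rho q sigma) + e + 2 * M * ens_measure q sigma S.
Proof.
  intros Hp Hq He Hd Hf Hcont.
  assert (Hp' := Hp). assert (Hq' := Hq).
  destruct Hp' as (Hp0 & Hp1 & Hps). destruct Hq' as (Hq0 & Hq1 & Hqs).
  set (g := fun k => tnorm (Msub (Mscale (p k) (rho k)) (Mscale (q k) (sigma k)))).
  destruct (isum_dominated g (fun k => p k + q k) (1 + 1)) as [G HG]; [|apply isum_plus; auto|].
  { intros k. generalize (tnorm_comb_bounds dim (p k) (q k) _ _ (Hps k) (Hqs k)).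
    rewrite !Rabs_right by (apply Rle_ge; auto). auto. }
  replace (2 * D0 p rho q sigma) with G by (unfold D0; fold g; rewrite (series_eq g G HG); field).
  destruct (ensemble_summable dim p rho (fun k => f (rho k)) M Hp) as [I1 HI1];
    [intros; apply Hf; auto|].
  destruct (ensemble_summable dim q sigma (fun k => f (sigma k)) M Hq) as [I2 HI2];
    [intros; apply Hf; auto|].
  rewrite (series_eq _ _ HI1), (series_eq _ _ HI2).
  apply (isum_abs_le (fun k => p k * f (rho k) - q k * f (sigma k)) _
    (fun k => (M + 4 * M / delta) * g k + e * q k + 2 * M * indicator S sigma q k));
    [apply isum_minus; auto| |].
  - apply isum_plus; [apply isum_plus; [apply isum_scal; auto|]|].
    + generalize (isum_scal _ _ e Hq1). rewrite Rmult_1_r. auto.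
    + apply isum_scal, ens_measure_sum; auto.
  - intros k. apply (weighted_diff_le f M e delta S); auto.
Qed.

Theorem Dstar_weak_conv p rho q sigma :
  is_ensemble dim q sigma -> (forall n, is_ensemble dim (p n) (rho n)) ->
  Un_cv (fun n => Dstar dim (p n) (rho n) q sigma) 0 -> weak_conv dim p rho q sigma.
Proof.
  intros Hq Hp HD f [M HM] Hc eps Heps.
  assert (Hq' := Hq). destruct Hq' as (Hq0 & Hq1 & Hqs).
  assert (HM0 : 0 <= M) by (generalize (Rabs_pos (f (sigma 0%nat))) (HM _ (Hqs 0%nat)); lra).
  set (e := eps / (4 * (M + 1))).
  assert (He : 0 < e) by (apply Rdiv_lt_0_compat; lra).
  destruct (isum_tail _ _ _ Hq1 He) as [K HK]. specialize (HK K (le_n K)).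
  apply Rabs_def2 in HK.
  destruct (continuous_uniform_finite f sigma K e Hc Hqs He) as [delta [Hd Hdelta]].
  set (C := M + 4 * M / delta).
  assert (HC : 0 <= C) by (apply Rplus_le_le_0_compat; [|apply Rdiv_nonneg]; lra).
  set (eta := eps / (8 * (C + 1))).
  assert (Heta : 0 < eta) by (apply Rdiv_lt_0_compat; lra).
  destruct (HD eta Heta) as [N HN]. exists N. intros n Hn.
  specialize (HN n Hn). unfold R_dist in *. rewrite Rminus_0_r, Rabs_right in HN
    by (apply Rle_ge, Dstar_ge0; auto).
  destruct (Dstar_approx dim _ _ _ _ eta (Hp n) Hq HN)
    as (p' & rho' & q' & sigma' & Hp' & Hsp & Hq' & Hsq & HD0).
  rewrite (series_same_measure dim _ _ _ _ f M (Hp n) Hp' Hsp HM).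
  rewrite (series_same_measure dim _ _ _ _ f M Hq Hq' Hsq HM).
  set (S := fun x => forall j, (j < K)%nat -> x <> sigma j).
  eapply Rle_lt_trans; [apply (integral_diff_le p' rho' q' sigma' f M e delta S); auto; try lra|].
  - intros k HS z Hz Hdz.
    destruct (not_all_ex_not _ _ HS) as [j Hj].
    apply imply_to_and in Hj. destruct Hj as [HjK Hj]. apply NNPP in Hj.
    rewrite Hj in *. apply Hdelta; auto.
  - rewrite <- Hsq. apply error_budget; auto.
    + split; [apply D0_ge0|exact HD0].
    + generalize (ens_measure_avoid_le q sigma K Hq). fold S e. lra.
Qed.

End DstarWeak.

(** * A coupling through a finite partition into cells *)

Definition first_hit (Q : nat -> Prop) (c : nat) : R :=
  if excluded_middle_informative (Q c /\ forall c', (c' < c)%nat -> ~ Q c') then 1 else 0.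

Lemma first_hit_01 Q c : 0 <= first_hit Q c <= 1.
Proof. unfold first_hit. destruct (excluded_middle_informative _); lra. Qed.

Lemma fsum_first_hit Q K :
  fsum K (first_hit Q) =
  if excluded_middle_informative (exists c, (c < K)%nat /\ Q c) then 1 else 0.
Proof.
  induction K; simpl.
  - destruct (excluded_middle_informative _) as [[c [Hc _]]|_]; [lia|reflexivity].
  - rewrite IHK. unfold first_hit.
    destruct (excluded_middle_informative (exists c, (c < K)%nat /\ Q c)) as [[c [Hc HQ]]|Hn];
      destruct (excluded_middle_informative (exists c, (c < S K)%nat /\ Q c)) as [Hs|Hs];
      destruct (excluded_middle_informative (Q K /\ _)) as [HK|HK]; try ring.
    + exfalso. exact (proj2 HK c Hc HQ).
    + exfalso. apply Hs. exists c. split; [lia|exact HQ].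
    + exfalso. apply Hs. exists c. split; [lia|exact HQ].
    + exfalso. destruct Hs as [c [Hc HQ]].
      destruct (Nat.eq_dec c K) as [->|Hne]; [|apply Hn; exists c; split; [lia|exact HQ]].
      apply HK. split; [exact HQ|]. intros c' Hc' HQ'. apply Hn. eauto.
    + exfalso. apply Hs. exists K. split; [lia|apply HK].
Qed.

Lemma fsum_first_hit_le1 Q K : fsum K (first_hit Q) <= 1.
Proof. rewrite fsum_first_hit. destruct (excluded_middle_informative _); lra. Qed.

Lemma fsum_first_hit_1 Q K c : (c < K)%nat -> Q c -> fsum K (first_hit Q) = 1.
Proof.
  intros Hc HQ. rewrite fsum_first_hit.
  destruct (excluded_middle_informative _) as [_|Hn]; [reflexivity|].
  exfalso. apply Hn. eauto.
Qed.

Lemma fsum_cells_bounds K w r a : (forall c, 0 <= w c) -> fsum K w <= 1 ->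
  (forall c, 0 <= r c <= 1) -> 0 <= a -> 0 <= fsum K (fun c => w c * r c * a) <= a.
Proof.
  intros Hw Hsum Hr Ha. split.
  - apply fsum_ge0. intros c _. generalize (Hw c) (Hr c). intros. apply Rmult_le_pos; nra.
  - apply Rle_trans with (fsum K (fun c => a * w c)).
    + apply fsum_le. intros c _. generalize (Hw c) (Hr c). intros.
      assert (0 <= w c * a * (1 - r c)) by (apply Rmult_le_pos; [apply Rmult_le_pos|]; lra).
      nra.
    + rewrite fsum_scal. nra.
Qed.

Lemma isum_outer_div u v r : infinite_sum v r -> (r = 0 -> u = 0) ->
  infinite_sum (fun j => u * v j / r) u.
Proof.
  intros Hv Hu. destruct (Req_dec r 0) as [Hz|Hn].
  - rewrite (Hu Hz). eapply isum_ext; [|apply isum_zero]. intros; unfold Rdiv; ring.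
  - generalize (isum_scal v r (u / r) Hv). replace (u / r * r) with u by (field; auto).
    apply isum_ext. intros; unfold Rdiv; ring.
Qed.

Lemma Rdiv_prod_mul_r m a b : 0 <= m <= a -> 0 <= m <= b -> m / (a * b) * b = m / a.
Proof.
  intros Ha Hb.
  destruct (Req_dec b 0) as [->|Hb0]; [replace m with 0 by lra; unfold Rdiv; ring|].
  destruct (Req_dec a 0) as [->|Ha0]; [replace m with 0 by lra; unfold Rdiv; ring|].
  field; auto.
Qed.

(* Inside the cell of [sigma c] (first centre within [delta]) the mass
   [Rmin (massA c) (massB c)] moves at cost at most [2 * delta]; the remaining
   mass [rest] is coupled independently, at cost at most [2]. *)
Section CellCoupling.
Variable dim : option nat.
Variables (p : nat -> R) (rho : nat -> Mat) (q : nat -> R) (sigma : nat -> Mat).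
Variables (K : nat) (delta : R).
Hypothesis Hp : is_ensemble dim p rho.
Hypothesis Hq : is_ensemble dim q sigma.
Hypothesis Hdelta : 0 < delta.

Definition cellA c x := first_hit (fun c => tdist x (sigma c) < delta) c.
Definition cellB c j := first_hit (fun c => (j < K)%nat /\ tdist (sigma j) (sigma c) < delta) c.
Definition massA c := series (fun i => cellA c (rho i) * p i).
Definition massB c := fsum K (fun j => cellB c j * q j).
Definition mass_min c := Rmin (massA c) (massB c).
Definition ratioA c := mass_min c / massA c.
Definition ratioB c := mass_min c / massB c.
Definition lam c := mass_min c / (massA c * massB c).
Definition restA i := p i - fsum K (fun c => cellA c (rho i) * ratioA c * p i).
Definition restB j := q j - fsum K (fun c => cellB c j * ratioB c * q j).
Definition rest := 1 - fsum K mass_min.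
Definition matched i j := fsum K (fun c => cellA c (rho i) * cellB c j * lam c * p i * q j).
Definition cell_coupling i j := matched i j + restA i * restB j / rest.

Lemma p_ge0 i : 0 <= p i. Proof. apply Hp. Qed.
Lemma q_ge0 j : 0 <= q j. Proof. apply Hq. Qed.

Lemma massA_sum c : infinite_sum (fun i => cellA c (rho i) * p i) (massA c).
Proof.
  apply series_sum, (isum_dominated _ p 1); [|apply Hp].
  intros i. generalize (first_hit_01 (fun c => tdist (rho i) (sigma c) < delta) c) (p_ge0 i).
  unfold cellA. split; nra.
Qed.

Lemma massB_sum c : infinite_sum (fun j => cellB c j * q j) (massB c).
Proof.
  apply isum_finite. intros j Hj. unfold cellB, first_hit.
  destruct (excluded_middle_informative _) as [[[HjK _] _]|_]; [lia|ring].
Qed.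

Lemma mass_min_bounds c : 0 <= mass_min c <= massA c /\ mass_min c <= massB c.
Proof.
  assert (0 <= massA c).
  { apply (isum_ge0 _ _ ltac:(intros; apply Rmult_le_pos; [apply first_hit_01|apply p_ge0])
             (massA_sum c)). }
  assert (0 <= massB c).
  { apply fsum_ge0. intros; apply Rmult_le_pos; [apply first_hit_01|apply q_ge0]. }
  unfold mass_min. split; [split; [apply Rmin_glb; auto|apply Rmin_l]|apply Rmin_r].
Qed.

Lemma ratioA_01 c : 0 <= ratioA c <= 1.
Proof. apply Rdiv_bounded_01. apply mass_min_bounds. Qed.
Lemma ratioB_01 c : 0 <= ratioB c <= 1.
Proof. apply Rdiv_bounded_01. generalize (mass_min_bounds c). lra. Qed.

Lemma lam_massB c : lam c * massB c = ratioA c.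
Proof. apply Rdiv_prod_mul_r; generalize (mass_min_bounds c); lra. Qed.
Lemma lam_massA c : lam c * massA c = ratioB c.
Proof.
  unfold lam. rewrite (Rmult_comm (massA c)).
  apply Rdiv_prod_mul_r; generalize (mass_min_bounds c); lra.
Qed.

Lemma lam_ge0 c : 0 <= lam c.
Proof.
  destruct (Req_dec (massB c) 0) as [Hz|Hn].
  - unfold lam. rewrite Hz, Rmult_0_r, Rdiv_0_r. lra.
  - generalize (ratioA_01 c) (mass_min_bounds c). rewrite <- lam_massB. intros. nra.
Qed.

Lemma restA_bounds i : 0 <= restA i <= p i.
Proof.
  unfold restA. generalize (fsum_cells_bounds K (fun c => cellA c (rho i)) ratioA (p i)
    (fun c => proj1 (first_hit_01 _ c)) (fsum_first_hit_le1 _ K) ratioA_01 (p_ge0 i)). lra.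
Qed.

Lemma restB_bounds j : 0 <= restB j <= q j.
Proof.
  unfold restB. generalize (fsum_cells_bounds K (fun c => cellB c j) ratioB (q j)
    (fun c => proj1 (first_hit_01 _ c)) (fsum_first_hit_le1 _ K) ratioB_01 (q_ge0 j)). lra.
Qed.

Lemma restA_sum : infinite_sum restA rest.
Proof.
  apply isum_minus; [apply Hp|]. apply isum_fsum. intros c _.
  unfold mass_min. fold (mass_min c). rewrite <- (Rdiv_mul_bounded (mass_min c) (massA c))
    by apply mass_min_bounds.
  eapply isum_ext; [|apply (isum_scal _ _ (ratioA c) (massA_sum c))]. intros; simpl; ring.
Qed.

Lemma restB_sum : infinite_sum restB rest.
Proof.
  apply isum_minus; [apply Hq|]. apply isum_fsum. intros c _.
  rewrite <- (Rdiv_mul_bounded (mass_min c) (massB c)) by (generalize (mass_min_bounds c); lra).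
  eapply isum_ext; [|apply (isum_scal _ _ (ratioB c) (massB_sum c))]. intros; simpl; ring.
Qed.

Lemma rest_bounds : 0 <= rest <= 1.
Proof.
  split; [apply (isum_ge0 _ _ (fun i => proj1 (restA_bounds i)) restA_sum)|].
  apply (isum_le restA p); [intros; apply restA_bounds|apply restA_sum|apply Hp].
Qed.

Lemma matched_ge0 i j : 0 <= matched i j.
Proof.
  apply fsum_ge0; intros c _.
  generalize (first_hit_01 (fun c => tdist (rho i) (sigma c) < delta) c)
             (first_hit_01 (fun c => (j < K)%nat /\ tdist (sigma j) (sigma c) < delta) c)
             (lam_ge0 c) (p_ge0 i) (q_ge0 j).
  unfold cellA, cellB. intros.
  apply Rmult_le_pos; [apply Rmult_le_pos; [apply Rmult_le_pos; [apply Rmult_le_pos|]|]|]; lra.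
Qed.

Lemma matched_row i : infinite_sum (fun j => matched i j) (p i - restA i).
Proof.
  unfold restA. replace (p i - _) with (fsum K (fun c => cellA c (rho i) * ratioA c * p i)) by ring.
  apply isum_fsum. intros c _.
  replace (cellA c (rho i) * ratioA c * p i) with (cellA c (rho i) * lam c * p i * massB c)
    by (rewrite <- lam_massB; ring).
  eapply isum_ext; [|apply (isum_scal _ _ (cellA c (rho i) * lam c * p i) (massB_sum c))].
  intros; simpl; ring.
Qed.

Lemma matched_col j : infinite_sum (fun i => matched i j) (q j - restB j).
Proof.
  unfold restB. replace (q j - _) with (fsum K (fun c => cellB c j * ratioB c * q j)) by ring.
  apply isum_fsum. intros c _.
  replace (cellB c j * ratioB c * q j) with (cellB c j * lam c * q j * massA c)
    by (rewrite <- lam_massA; ring).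
  eapply isum_ext; [|apply (isum_scal _ _ (cellB c j * lam c * q j) (massA_sum c))].
  intros; simpl; ring.
Qed.

Lemma rest_zero_restA i : rest = 0 -> restA i = 0.
Proof.
  intros Hz. generalize (isum_term_le restA rest i (fun i => proj1 (restA_bounds i)) restA_sum)
    (restA_bounds i). lra.
Qed.

Lemma rest_zero_restB j : rest = 0 -> restB j = 0.
Proof.
  intros Hz. generalize (isum_term_le restB rest j (fun j => proj1 (restB_bounds j)) restB_sum)
    (restB_bounds j). lra.
Qed.

Lemma unmatched_ge0 i j : 0 <= restA i * restB j / rest.
Proof.
  generalize (restA_bounds i) (restB_bounds j) rest_bounds. intros.
  destruct (Req_dec rest 0) as [->|Hn]; [unfold Rdiv; rewrite Rinv_0; lra|].
  apply Rdiv_nonneg; nra.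
Qed.

Lemma cell_coupling_coupling : coupling p q cell_coupling.
Proof.
  split; [|split].
  - intros i j. apply Rplus_le_le_0_compat; [apply matched_ge0|apply unmatched_ge0].
  - intros i. unfold cell_coupling. replace (p i) with ((p i - restA i) + restA i) by ring.
    apply isum_plus; [apply matched_row|].
    apply isum_outer_div; [apply restB_sum|apply rest_zero_restA].
  - intros j. unfold cell_coupling. replace (q j) with ((q j - restB j) + restB j) by ring.
    apply isum_plus; [apply matched_col|].
    eapply isum_ext; [|apply (isum_outer_div (restB j) restA rest restA_sum (rest_zero_restB j))].
    intros; simpl; unfold Rdiv; ring.
Qed.

Lemma matched_cost i j : matched i j * tdist (rho i) (sigma j) <= 2 * delta * matched i j.
Proof.
  unfold matched. rewrite Rmult_comm, <- !fsum_scal. apply fsum_le; intros c Hc.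
  generalize (lam_ge0 c) (p_ge0 i) (q_ge0 j). intros.
  unfold cellA, cellB, first_hit.
  destruct (excluded_middle_informative (_ /\ _)) as [[HA _]|HA];
    [|rewrite !Rmult_0_l, !Rmult_0_r; lra].
  destruct (excluded_middle_informative (_ /\ _)) as [[[_ HB] _]|HB];
    [|rewrite !Rmult_0_r, !Rmult_0_l, !Rmult_0_r; lra].
  rewrite !Rmult_1_l. apply Rmult_le_compat_r; [apply Rmult_le_pos; [apply Rmult_le_pos|]; auto|].
  destruct Hp as (_ & _ & Hsp). destruct Hq as (_ & _ & Hsq).
  eapply Rle_trans; [apply (tdist_triangle dim _ (sigma c)); auto|].
  rewrite (tdist_sym dim (sigma c)); auto. lra.
Qed.

Lemma DK_le_cells : DK p rho q sigma <= delta + rest.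
Proof.
  destruct Hp as (_ & Hp1 & Hsp). destruct Hq as (_ & _ & Hsq).
  eapply Rle_trans; [apply DK_le_coupling, cell_coupling_coupling|].
  destruct (double_series_dominated (fun i j => cell_coupling i j * tdist (rho i) (sigma j))
    (fun i j => 2 * delta * matched i j + 2 * (restA i * restB j / rest))
    (fun i => 2 * delta * (p i - restA i) + 2 * restA i) (2 * delta * (1 - rest) + 2 * rest))
    as [_ Hle].
  - intros i j. unfold cell_coupling.
    generalize (matched_cost i j) (tdist_bounds dim _ _ (Hsp i) (Hsq j)) (matched_ge0 i j)
      (unmatched_ge0 i j). nra.
  - intros i. apply isum_plus; apply isum_scal; [apply matched_row|].
    apply isum_outer_div; [apply restB_sum|apply rest_zero_restA].
  - apply isum_plus; apply isum_scal; [apply isum_minus; [apply Hp1|]|]; apply restA_sum.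
  - generalize rest_bounds. nra.
Qed.

End CellCoupling.

(** * Weak convergence implies convergence in [D_K] *)

Lemma finite_gap (g : nat -> R) L e : (forall i, 0 <= g i) -> 0 < e ->
  exists d, 0 < d <= e /\ forall i, (i < L)%nat -> g i = 0 \/ 2 * d <= g i.
Proof.
  intros Hg He. induction L.
  - exists e; split; [lra|intros; lia].
  - destruct IHL as [d [Hd H]].
    destruct (Req_dec (g L) 0) as [Hz|Hn].
    + exists d; split; auto. intros i Hi. destruct (Nat.eq_dec i L) as [->|]; auto. apply H; lia.
    + assert (0 < g L) by (specialize (Hg L); lra).
      exists (Rmin d (g L / 2)).
      split; [split; [apply Rmin_pos|apply Rle_trans with d; [apply Rmin_l|]]; lra|].
      intros i Hi. generalize (Rmin_l d (g L / 2)) (Rmin_r d (g L / 2)). intros.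
      destruct (Nat.eq_dec i L) as [->|]; [right; lra|].
      destruct (H i ltac:(lia)); [left|right]; lra.
Qed.

Lemma finite_gap2 (F : nat -> nat -> R) K e : (forall i j, 0 <= F i j) -> 0 < e ->
  exists d, 0 < d <= e /\
    forall c c', (c < K)%nat -> (c' < K)%nat -> F c c' = 0 \/ 2 * d <= F c c'.
Proof.
  intros HF He. induction K.
  - exists e; split; [lra|intros; lia].
  - destruct IHK as [d1 [Hd1 H1]].
    destruct (finite_gap (fun c' => F K c') (S K) d1 (fun i => HF K i) ltac:(lra)) as [d2 [Hd2 H2]].
    destruct (finite_gap (fun c => F c K) K d2 (fun i => HF i K) ltac:(lra)) as [d3 [Hd3 H3]].
    exists d3; split; [lra|]. intros c c' Hc Hc'.
    destruct (Nat.eq_dec c K) as [->|Hn]; [destruct (H2 c' Hc'); [left|right]; lra|].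
    destruct (Nat.eq_dec c' K) as [->|Hn']; [destruct (H3 c ltac:(lia)); [left|right]; lra|].
    destruct (H1 c c' ltac:(lia) ltac:(lia)); [left|right]; lra.
Qed.

Lemma finite_eventually (P : nat -> nat -> Prop) K :
  (forall c, (c < K)%nat -> exists N, forall n, (N <= n)%nat -> P c n) ->
  exists N, forall n, (N <= n)%nat -> forall c, (c < K)%nat -> P c n.
Proof.
  induction K; intros H; [exists 0%nat; intros; lia|].
  destruct IHK as [N1 HN1]; [intros; apply H; lia|].
  destruct (H K ltac:(lia)) as [N2 HN2].
  exists (N1 + N2)%nat. intros n Hn c Hc. destruct (Nat.eq_dec c K) as [->|].
  - apply HN2; lia.
  - apply HN1; lia.
Qed.

Lemma fsum_Rmin_ge K a b e : 0 <= e -> (forall c, (c < K)%nat -> b c - e <= a c) ->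
  fsum K b - INR K * e <= fsum K (fun c => Rmin (a c) (b c)).
Proof.
  intros He. induction K; intros H; [simpl; lra|]. rewrite S_INR. simpl fsum.
  assert (b K - e <= Rmin (a K) (b K)) by (apply Rmin_glb; [apply H; lia|lra]).
  assert (fsum K b - INR K * e <= fsum K (fun c => Rmin (a c) (b c))) by (apply IHK; auto).
  lra.
Qed.

Lemma Rmax_0_lipschitz a b : Rabs (Rmax 0 a - Rmax 0 b) <= Rabs (a - b).
Proof.
  unfold Rmax. destruct (Rle_dec 0 a); destruct (Rle_dec 0 b);
  unfold Rabs; repeat destruct (Rcase_abs _); lra.
Qed.

Section WeakDK.
Variable dim : option nat.

Definition bump (z : Mat) (delta : R) (x : Mat) := Rmax 0 (1 - tdist x z / delta).

Lemma tdist_diff_le x y z : is_state dim x -> is_state dim y -> is_state dim z ->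
  Rabs (tdist x z - tdist y z) <= tdist x y.
Proof.
  intros Hx Hy Hz. apply Rabs_le.
  generalize (tdist_triangle dim x y z Hx Hy Hz) (tdist_triangle dim y x z Hy Hx Hz).
  rewrite (tdist_sym dim y x); auto. lra.
Qed.

Lemma bump_bounds z delta x : is_state dim x -> is_state dim z -> 0 < delta ->
  0 <= bump z delta x <= 1.
Proof.
  intros Hx Hz Hd. unfold bump. generalize (tdist_bounds dim x z Hx Hz). intros.
  assert (0 <= tdist x z / delta) by (apply Rdiv_nonneg; lra).
  split; [apply Rmax_l|apply Rmax_lub; lra].
Qed.

Lemma bump_bounded z delta : is_state dim z -> 0 < delta -> bounded_on_states dim (bump z delta).
Proof.
  intros Hz Hd. exists 1. intros x Hx. generalize (bump_bounds z delta x Hx Hz Hd). intros.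
  rewrite Rabs_right; lra.
Qed.

Lemma bump_continuous z delta : is_state dim z -> 0 < delta ->
  continuous_on_states dim (bump z delta).
Proof.
  intros Hz Hd x Hx eps He. exists (eps * delta). split; [apply Rmult_lt_0_compat; auto|].
  intros y Hy Hxy. unfold bump. eapply Rle_lt_trans; [apply Rmax_0_lipschitz|].
  replace (1 - tdist x z / delta - (1 - tdist y z / delta)) with ((tdist y z - tdist x z) / delta)
    by (field; lra).
  unfold Rdiv.
  rewrite Rabs_mult, (Rabs_right (/ delta)) by (apply Rle_ge, Rlt_le, Rinv_0_lt_compat; auto).
  apply (Rmult_lt_reg_r delta); auto. rewrite Rmult_assoc, Rinv_l, Rmult_1_r by lra.
  rewrite Rabs_minus_sym. eapply Rle_lt_trans; [apply tdist_diff_le; auto|exact Hxy].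
Qed.

Lemma bump_pos z delta x : 0 < delta -> bump z delta x <> 0 -> tdist x z < delta.
Proof.
  intros Hd Hb. unfold bump, Rmax in Hb.
  destruct (Rle_dec 0 (1 - tdist x z / delta)) as [Hl|Hl]; [|lra].
  assert (tdist x z / delta < 1) by lra.
  apply (Rmult_lt_reg_r (/ delta)); [apply Rinv_0_lt_compat; auto|].
  rewrite Rinv_r by lra. exact H.
Qed.

Section Cells.
Variables (q : nat -> R) (sigma : nat -> Mat) (K : nat) (delta : R).
Hypothesis Hq : is_ensemble dim q sigma.
Hypothesis Hdelta : 0 < delta.
Hypothesis Hsep : forall c c', (c < K)%nat -> (c' < K)%nat ->
  tdist (sigma c) (sigma c') = 0 \/ 2 * delta <= tdist (sigma c) (sigma c').

Let cell_of j c := (j < K)%nat /\ tdist (sigma j) (sigma c) < delta.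

Lemma cell_of_tdist0 j c : (c < K)%nat -> cell_of j c -> tdist (sigma j) (sigma c) = 0.
Proof. intros Hc [HjK Hjc]. destruct (Hsep j c HjK Hc); lra. Qed.

Lemma massB_le_bump_integral c s : (c < K)%nat ->
  infinite_sum (fun j => q j * bump (sigma c) delta (sigma j)) s -> massB q sigma K delta c <= s.
Proof.
  intros Hc Hs. destruct Hq as (Hq0 & _ & Hqs).
  eapply isum_le; [|apply massB_sum|exact Hs]. intros j.
  unfold cellB, first_hit. destruct (excluded_middle_informative _) as [[Hj _]|_].
  - unfold bump. rewrite (cell_of_tdist0 j c Hc Hj). unfold Rdiv.
    rewrite Rmult_0_l, Rminus_0_r, Rmax_right by lra. lra.
  - generalize (bump_bounds (sigma c) delta _ (Hqs j) (Hqs c) Hdelta) (Hq0 j). nra.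
Qed.

Lemma bump_integral_le_massA p rho c j0 s : is_ensemble dim p rho -> (c < K)%nat ->
  cell_of j0 c -> (forall c', (c' < c)%nat -> ~ cell_of j0 c') ->
  infinite_sum (fun i => p i * bump (sigma c) delta (rho i)) s -> s <= massA p rho sigma delta c.
Proof.
  intros Hp Hc Hj0 Hmin Hs. assert (Hp' := Hp). destruct Hp' as (Hp0 & _ & Hps).
  destruct Hq as (_ & _ & Hqs).
  eapply isum_le; [|exact Hs|apply (massA_sum dim p rho sigma delta Hp)].
  intros i. generalize (bump_bounds (sigma c) delta _ (Hps i) (Hqs c) Hdelta) (Hp0 i).
  intros Hb Hpi.
  destruct (Req_dec (bump (sigma c) delta (rho i)) 0) as [Hb0|Hb0].
  { rewrite Hb0. generalize (first_hit_01 (fun c => tdist (rho i) (sigma c) < delta) c).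
    unfold cellA. nra. }
  apply bump_pos in Hb0; auto.
  unfold cellA, first_hit. destruct (excluded_middle_informative _) as [_|Hn]; [nra|].
  exfalso. apply Hn. split; auto. intros c' Hc' Hic'.
  apply (Hmin c' Hc'). split; [apply Hj0|].
  assert (tdist (sigma c) (sigma c') <= tdist (sigma c) (rho i) + tdist (rho i) (sigma c'))
    by (apply (tdist_triangle dim); auto).
  rewrite (tdist_sym dim (sigma c) (rho i)) in H by auto.
  assert (tdist (sigma j0) (sigma c') <= tdist (sigma j0) (sigma c) + tdist (sigma c) (sigma c'))
    by (apply (tdist_triangle dim); auto).
  rewrite (cell_of_tdist0 j0 c Hc Hj0) in H0.
  destruct (Hsep c c' Hc ltac:(lia)); lra.
Qed.

Lemma massB_eventually_le p rho c e :
  (forall n, is_ensemble dim (p n) (rho n)) -> weak_conv dim p rho q sigma ->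
  (c < K)%nat -> 0 < e ->
  exists N, forall n, (N <= n)%nat ->
    massB q sigma K delta c - e <= massA (p n) (rho n) sigma delta c.
Proof.
  intros Hp Hw Hc He. assert (Hq' := Hq). destruct Hq' as (Hq0 & Hq1 & Hqs).
  destruct (classic (exists j0, cell_of j0 c /\ forall c', (c' < c)%nat -> ~ cell_of j0 c'))
    as [[j0 [Hj0 Hmin]]|Hno].
  - destruct (Hw _ (bump_bounded _ _ (Hqs c) Hdelta) (bump_continuous _ _ (Hqs c) Hdelta) e He)
      as [N HN].
    exists N. intros n Hn. specialize (HN n Hn). unfold R_dist in HN. apply Rabs_def2 in HN.
    assert (Hbump : forall x, is_state dim x -> Rabs (bump (sigma c) delta x) <= 1).
    { intros x Hx. generalize (bump_bounds _ delta x Hx (Hqs c) Hdelta). intros.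
      rewrite Rabs_right; lra. }
    destruct (ensemble_summable dim (p n) (rho n) (fun i => bump (sigma c) delta (rho n i)) 1
                (Hp n)) as [S1 HS1];
      [intros; apply Hbump, (Hp n)|].
    destruct (ensemble_summable dim q sigma (fun j => bump (sigma c) delta (sigma j)) 1 Hq)
      as [S2 HS2]; [intros; apply Hbump, Hqs|].
    rewrite (series_eq _ _ HS1), (series_eq _ _ HS2) in HN.
    generalize (massB_le_bump_integral c S2 Hc HS2)
      (bump_integral_le_massA _ _ c j0 S1 (Hp n) Hc Hj0 Hmin HS1). lra.
  - exists 0%nat. intros n _.
    replace (massB q sigma K delta c) with 0.
    + generalize (mass_min_bounds dim (p n) (rho n) q sigma K delta (Hp n) Hq c). lra.
    + symmetry. unfold massB. rewrite (fsum_ext _ _ (fun _ => 0)); [apply fsum_zero|].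
      intros j _. unfold cellB, first_hit. destruct (excluded_middle_informative _); [|ring].
      exfalso. apply Hno. eauto.
Qed.

Lemma fsum_massB : fsum K (massB q sigma K delta) = fsum K q.
Proof.
  unfold massB. rewrite fsum_swap. apply fsum_ext. intros j Hj.
  rewrite (fsum_ext _ _ (fun c => q j * cellB sigma K delta c j)) by (intros; ring).
  rewrite fsum_scal. unfold cellB. rewrite (fsum_first_hit_1 _ K j); [ring|auto|].
  split; auto. rewrite (tdist_refl dim); [lra|apply Hq].
Qed.

End Cells.

Theorem weak_conv_DK p rho q sigma :
  is_ensemble dim q sigma -> (forall n, is_ensemble dim (p n) (rho n)) ->
  weak_conv dim p rho q sigma -> Un_cv (fun n => DK (p n) (rho n) q sigma) 0.
Proof.
  intros Hq Hp Hw eps Heps.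
  assert (Hq' := Hq). destruct Hq' as (Hq0 & Hq1 & Hqs).
  set (e := eps / 4).
  destruct (isum_tail _ _ e Hq1 ltac:(unfold e; lra)) as [K HK].
  specialize (HK K (le_n K)). apply Rabs_def2 in HK.
  destruct (finite_gap2 (fun c c' => tdist (sigma c) (sigma c')) K e
             ltac:(intros; apply (tdist_bounds dim); auto) ltac:(unfold e; lra))
    as [delta [[Hd0 Hde] Hsep]].
  set (e' := e / INR (S K)).
  assert (He' : 0 < e') by (apply Rdiv_lt_0_compat; [unfold e; lra|apply lt_0_INR; lia]).
  assert (HKe : INR K * e' <= e).
  { unfold e'. rewrite S_INR. apply (Rmult_le_reg_r (INR K + 1)); [generalize (pos_INR K); lra|].
    replace (INR K * (e / (INR K + 1)) * (INR K + 1)) with (INR K * e)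
      by (field; generalize (pos_INR K); lra).
    unfold e. nra. }
  destruct (finite_eventually _ K (fun c Hc => massB_eventually_le q sigma K delta Hq Hd0 Hsep
              p rho c e' Hp Hw Hc He')) as [N HN].
  exists N. intros n Hn. unfold R_dist. rewrite Rminus_0_r, Rabs_right
    by (apply Rle_ge, DK_ge0 with dim; auto).
  generalize (DK_le_cells dim (p n) (rho n) q sigma K delta (Hp n) Hq Hd0)
    (fsum_Rmin_ge K (massA (p n) (rho n) sigma delta) (massB q sigma K delta) e'
       (Rlt_le _ _ He') (HN n Hn)).
  rewrite (fsum_massB q sigma K delta Hq Hd0). unfold rest, mass_min, e in *. lra.
Qed.

End WeakDK.

Theorem proposition4 (dim : option nat)
  (p : nat -> nat -> R) (rho : nat -> nat -> Mat)
  (p0 : nat -> R) (rho0 : nat -> Mat) :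
  is_ensemble dim p0 rho0 ->
  (forall n, is_ensemble dim (p n) (rho n)) ->
  (Un_cv (fun n => Dstar dim (p n) (rho n) p0 rho0) 0 <->
   Un_cv (fun n => DK (p n) (rho n) p0 rho0) 0) /\
  (Un_cv (fun n => DK (p n) (rho n) p0 rho0) 0 <->
   weak_conv dim p rho p0 rho0).
Proof.
  intros H0 Hn.
  assert (DK_Dstar : Un_cv (fun n => DK (p n) (rho n) p0 rho0) 0 ->
                     Un_cv (fun n => Dstar dim (p n) (rho n) p0 rho0) 0).
  { apply Un_cv_0_le. intros n. split; [apply Dstar_ge0|apply Dstar_le_DK]; auto. }
  split; split; intros H.
  - apply (weak_conv_DK dim); auto. apply (Dstar_weak_conv dim); auto.
  - apply DK_Dstar, H.
  - apply (Dstar_weak_conv dim); auto.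
  - apply (weak_conv_DK dim); auto.
Qed.
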